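(* Under the assumptions of the context, the linear program $\mathbf L_H^{\mathcal X,\infty,\mathcal T}$ has a finite optimal value $\Psi^{\mathcal X,\infty,\mathcal T}(a,\mathbf C)$, attained by an optimal solution. For every feasible point of $\mathbf L_H^{\mathcal X,\infty,\mathcal T}$, the semi-static strategy which holds, for each $n$, the claim paying $\bar e^1_n(X_{t_n})+\bar e^2_n(X_{t_n})$ at $t_n$, additionally holds the claim paying $\bar v_N(X_{t_N})$ at $t_N$, and holds $\tilde d^1_n(X_{t_n})$ shares over $[t_n,t_{n+1}]$ before exercise and $\tilde d^2_n(X_{t_n})$ shares from the exercise date on, super-replicates the American claim for all exercise dates in $\mathcal T$ and along all non-negative price paths; its cost is the objective value. Consequently \[ \inf_{\mathcal S^{\mathbb R^+,\mathcal T}(a)}H\le\Psi^{\mathcal X,\infty,\mathcal T}(a,\mathbf C). \]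
   Context: Fix $N\ge1$, $J\ge1$, times $0=t_0<t_1<\dots<t_N=T$, $\mathcal T=\{t_1,\dots,t_N\}$, $s_0>0$, strikes $0=x_0<x_1<\dots<x_J$ (discounted prices, zero interest). Call prices $c_{j,n}$ (payoff $(X_{t_n}-x_j)^+$ at $t_n$, $c_{0,n}=s_0$) satisfy: $s_0=c_{0,n}>c_{1,n}>\dots>c_{J,n}>0$; $1>\frac{c_{0,n}-c_{1,n}}{x_1}>\frac{c_{1,n}-c_{2,n}}{x_2-x_1}>\dots>\frac{c_{J-1,n}-c_{J,n}}{x_J-x_{J-1}}>0$; $c_{j,n+1}>c_{j,n}$ for $1\le j\le J$, $1\le n\le N-1$. Let $\hat p_{0,n}=1-\frac{s_0-c_{1,n}}{x_1}$, $\hat p_{j,n}=\frac{c_{j-1,n}-c_{j,n}}{x_j-x_{j-1}}-\frac{c_{j,n}-c_{j+1,n}}{x_{j+1}-x_j}$ ($1\le j<J$), $\hat p_{J,n}=\frac{c_{J-1,n}-c_{J,n}}{x_J-x_{J-1}}$, $\hat p_{J+1,n}=c_{J,n}$. The payoff $a:[0,\infty)\times\mathcal T\to[0,\infty)$ is convex in its first argument with $\ell_n:=\lim_{x\uparrow\infty}a(x,t_n)/x<R<\infty$. $\mathbf L_H^{\mathcal X,\infty,\mathcal T}$: over reals $e^1_{j,n},e^2_{j,n},v_{j,n}$ ($0\le j\le J+1$, $1\le n\le N$), $d^1_{j,n},d^2_{j,n}$ ($1\le n\le N-1$), with $e^1_{j,N}=e^2_{j,1}=0$, minimise $\sum_n\sum_{j=0}^{J+1}(e^1_{j,n}+e^2_{j,n})\hat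 p_{j,n}+\sum_{j=0}^{J+1}v_{j,N}\hat p_{j,N}$ subject to $v_{j,n}\ge0$ and: (i) $v_{j,n}\ge a(x_j,t_n)$ ($0\le j\le J$), $v_{J+1,n}\ge\ell_n$; (ii) $e^1_{j,n}+e^2_{k,n+1}+(x_k-x_j)d^1_{j,n}\ge0$ ($0\le j,k\le J$), $e^1_{J+1,n}-d^1_{J+1,n}\ge0$, $e^2_{J+1,n+1}+d^1_{j,n}\ge0$ ($0\le j\le J$), $e^1_{J+1,n}+e^2_{J+1,n+1}\ge0$; (iii) $e^1_{j,n}+e^2_{k,n+1}+(x_k-x_j)d^2_{j,n}-v_{j,n}+v_{k,n+1}\ge0$ ($0\le j,k\le J$), $e^1_{J+1,n}-d^2_{J+1,n}-v_{J+1,n}\ge0$, $e^2_{J+1,n+1}+d^2_{j,n}+v_{J+1,n+1}\ge0$ ($0\le j\le J$), $e^1_{J+1,n}+e^2_{J+1,n+1}-v_{J+1,n}+v_{J+1,n+1}\ge0$ (with $1\le n\le N$ in (i), $1\le n\le N-1$ in (ii),(iii)). Extended linear interpolation of $(h_0,\dots,h_{J+1})$: $\bar h(x)=\frac{x_{j+1}-x}{x_{j+1}-x_j}h_j+\frac{x-x_j}{x_{j+1}-x_j}h_{j+1}$ on $[x_j,x_{j+1}]$, $j<J$, and $\bar h(x)=h_J+(x-x_J)h_{J+1}$ for $x\ge x_J$; the claim paying $\bar h(X_{t_n})$ at $t_n$ is a portfolio of bond, stock and calls of maturity $t_n$. Mixed interpolation: with $u^1_{j,n}=\frac{e^1_{j+1,n}-e^1_{j,n}}{x_{j+1}-x_j}$,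 $u^2_{j,n}=\frac{(e^1_{j+1,n}-v_{j+1,n})-(e^1_{j,n}-v_{j,n})}{x_{j+1}-x_j}$: $\tilde d^\delta_n(x_j)=d^\delta_{j,n}$; on $(x_j,x_{j+1})$, $\tilde d^\delta_n=d^\delta_{j,n}$ if $d^\delta_{j,n}\le u^\delta_{j,n}$, $=d^\delta_{j+1,n}$ if $d^\delta_{j,n}>u^\delta_{j,n}\le d^\delta_{j+1,n}$, $=u^\delta_{j,n}$ if $d^\delta_{j+1,n}<u^\delta_{j,n}<d^\delta_{j,n}$; for $x>x_J$, $\tilde d^1_n(x)=\min\{d^1_{J,n},e^1_{J+1,n}\}$, $\tilde d^2_n(x)=\min\{d^2_{J,n},e^1_{J+1,n}-v_{J+1,n}\}$. $\mathcal S^{\mathbb R^+,\mathcal T}(a)$: semi-static strategies (static portfolio of bonds, stock and traded calls with cost $H$ computed from the call prices; bounded stock holdings at times $t_n$, $1\le n\le N-1$, depending on the path so far and, after exercise, on the exercise time) whose terminal payoff is $\ge a(x_\rho,\rho)$ for all paths in $[0,\infty)^N$ and all exercise times $\rho\in\mathcal T$. *)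

From Stdlib Require Import Reals Lra Lia.
Open Scope R_scope.

Fixpoint sum_lt (k : nat) (f : nat -> R) : R :=
  match k with O => 0 | S k' => sum_lt k' f + f k' end.

(* sumR m n f = f m + f (m+1) + ... + f n  (empty if n < m) *)
Definition sumR (m n : nat) (f : nat -> R) : R :=
  sum_lt (S n - m) (fun i => f (m + i)%nat).

(* strikes x_0 = 0 < x_1 < ... < x_J ; calls c j n = price of (X_{t_n}-x_j)^+ *)
Definition market_assumptions (N J : nat) (t : nat -> R) (s0 : R)
    (x : nat -> R) (c : nat -> nat -> R) : Prop :=
  (1 <= N)%nat /\ (1 <= J)%nat /\
  t 0%nat = 0 /\ (forall n, (n < N)%nat -> t n < t (S n)) /\
  0 < s0 /\
  x 0%nat = 0 /\ (forall j, (j < J)%nat -> x j < x (S j)) /\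
  (forall n, (1 <= n <= N)%nat ->
     c 0%nat n = s0 /\
     (forall j, (j < J)%nat -> c (S j) n < c j n) /\
     0 < c J n /\
     (s0 - c 1%nat n) / x 1%nat < 1 /\
     (forall j, (1 <= j < J)%nat ->
        (c j n - c (S j) n) / (x (S j) - x j)
          < (c (j - 1)%nat n - c j n) / (x j - x (j - 1)%nat)) /\
     0 < (c (J - 1)%nat n - c J n) / (x J - x (J - 1)%nat)) /\
  (forall j n, (1 <= j <= J)%nat -> (1 <= n <= N - 1)%nat -> c j n < c j (S n)).

Definition payoff_assumptions (N : nat) (t : nat -> R) (a : R -> R -> R)
    (l : nat -> R) : Prop :=
  forall n, (1 <= n <= N)%nat ->
    (forall y, 0 <= y -> 0 <= a y (t n)) /\
    (forall y z lam, 0 <= y -> 0 <= z -> 0 <= lam <= 1 ->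
       a (lam * y + (1 - lam) * z) (t n) <= lam * a y (t n) + (1 - lam) * a z (t n)) /\
    (forall eps, 0 < eps -> exists M, forall y, M < y -> Rabs (a y (t n) / y - l n) < eps).

Definition phat (J : nat) (s0 : R) (x : nat -> R) (c : nat -> nat -> R)
    (j n : nat) : R :=
  if Nat.eqb j 0 then 1 - (s0 - c 1%nat n) / x 1%nat
  else if Nat.ltb j J then
    (c (j - 1)%nat n - c j n) / (x j - x (j - 1)%nat)
    - (c j n - c (S j) n) / (x (S j) - x j)
  else if Nat.eqb j J then (c (J - 1)%nat n - c J n) / (x J - x (J - 1)%nat)
  else if Nat.eqb j (S J) then c J n
  else 0.

Record lpvar := LPvar {
  e1 : nat -> nat -> R;
  e2 : nat -> nat -> R;
  v  : nat -> nat -> R;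
  d1 : nat -> nat -> R;
  d2 : nat -> nat -> R }.

Definition lp_feasible (N J : nat) (t : nat -> R) (x : nat -> R)
    (a : R -> R -> R) (l : nat -> R) (z : lpvar) : Prop :=
  (forall j, (j <= S J)%nat -> e1 z j N = 0 /\ e2 z j 1%nat = 0) /\
  (forall j n, (j <= S J)%nat -> (1 <= n <= N)%nat -> 0 <= v z j n) /\
  (* (i) *)
  (forall n, (1 <= n <= N)%nat ->
     (forall j, (j <= J)%nat -> a (x j) (t n) <= v z j n) /\ l n <= v z (S J) n) /\
  (* (ii) *)
  (forall n, (1 <= n <= N - 1)%nat ->
     (forall j k, (j <= J)%nat -> (k <= J)%nat ->
        0 <= e1 z j n + e2 z k (S n) + (x k - x j) * d1 z j n) /\
     0 <= e1 z (S J) n - d1 z (S J) n /\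
     (forall j, (j <= J)%nat -> 0 <= e2 z (S J) (S n) + d1 z j n) /\
     0 <= e1 z (S J) n + e2 z (S J) (S n)) /\
  (* (iii) *)
  (forall n, (1 <= n <= N - 1)%nat ->
     (forall j k, (j <= J)%nat -> (k <= J)%nat ->
        0 <= e1 z j n + e2 z k (S n) + (x k - x j) * d2 z j n - v z j n + v z k (S n)) /\
     0 <= e1 z (S J) n - d2 z (S J) n - v z (S J) n /\
     (forall j, (j <= J)%nat -> 0 <= e2 z (S J) (S n) + d2 z j n + v z (S J) (S n)) /\
     0 <= e1 z (S J) n + e2 z (S J) (S n) - v z (S J) n + v z (S J) (S n)).

Definition lp_objective (N J : nat) (s0 : R) (x : nat -> R) (c : nat -> nat -> R)
    (z : lpvar) : R :=
  sumR 1 N (fun n => sumR 0 (S J) (fun j =>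
     (e1 z j n + e2 z j n) * phat J s0 x c j n))
  + sumR 0 (S J) (fun j => v z j N * phat J s0 x c j N).

Definition seg (x : nat -> R) (h : nat -> R) (j : nat) (y : R) : R :=
  ((x (S j) - y) * h j + (y - x j) * h (S j)) / (x (S j) - x j).

Fixpoint hbar_rec (J : nat) (x : nat -> R) (h : nat -> R) (y : R) (j m : nat) : R :=
  match m with
  | O => h J + (y - x J) * h (S J)
  | S m' => if Rle_dec y (x (S j)) then seg x h j y else hbar_rec J x h y (S j) m'
  end.

(* hbar h y : on [x_j, x_{j+1}] (j < J) linear interpolation,
   for y >= x_J : h_J + (y - x_J) h_{J+1} *)
Definition hbar (J : nat) (x : nat -> R) (h : nat -> R) (y : R) : R :=
  hbar_rec J x h y 0 J.

Definition mix_inner (x : nat -> R) (d u : nat -> R) (j : nat) : R :=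
  if Rle_dec (d j) (u j) then d j
  else if Rle_dec (u j) (d (S j)) then d (S j)
  else u j.

Fixpoint mix_rec (x : nat -> R) (d u : nat -> R) (tail : R) (y : R) (j m : nat) : R :=
  if Rle_dec y (x j) then d j
  else match m with
       | O => tail
       | S m' => if Rlt_dec y (x (S j)) then mix_inner x d u j
                 else mix_rec x d u tail y (S j) m'
       end.

Definition mixinterp (J : nat) (x : nat -> R) (d u : nat -> R) (tail y : R) : R :=
  mix_rec x d u tail y 0 J.

Definition u1 (x : nat -> R) (z : lpvar) (n j : nat) : R :=
  (e1 z (S j) n - e1 z j n) / (x (S j) - x j).
Definition u2 (x : nat -> R) (z : lpvar) (n j : nat) : R :=
  ((e1 z (S j) n - v z (S j) n) - (e1 z j n - v z j n)) / (x (S j) - x j).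

Definition dtilde1 (J : nat) (x : nat -> R) (z : lpvar) (n : nat) (y : R) : R :=
  mixinterp J x (fun j => d1 z j n) (u1 x z n)
            (Rmin (d1 z J n) (e1 z (S J) n)) y.
Definition dtilde2 (J : nat) (x : nat -> R) (z : lpvar) (n : nat) (y : R) : R :=
  mixinterp J x (fun j => d2 z j n) (u2 x z n)
            (Rmin (d2 z J n) (e1 z (S J) n - v z (S J) n)) y.

(* static part: [bond] units of bond, [calls j n] units of the call with strike x_j
   and maturity t_n (j = 0 is the stock, as c 0 n = s0 and x_0 = 0);
   dynamic part: [delta n X rho] shares held over [t_n, t_{n+1}] (1 <= n <= N-1),
   along the path X (X i = X_{t_i}, 1 <= i <= N) with exercise time t_rho. *)
Record strategy := Strategy {
  bond  : R;
  calls : nat -> nat -> R;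
  delta : nat -> (nat -> R) -> nat -> R }.

Definition cost (N J : nat) (c : nat -> nat -> R) (St : strategy) : R :=
  bond St + sumR 1 N (fun n => sumR 0 J (fun j => calls St j n * c j n)).

Definition strat_payoff (N J : nat) (x : nat -> R) (St : strategy)
    (X : nat -> R) (rho : nat) : R :=
  bond St + sumR 1 N (fun n => sumR 0 J (fun j => calls St j n * Rmax (X n - x j) 0))
  + sumR 1 (N - 1) (fun n => delta St n X rho * (X (S n) - X n)).

Definition nonneg_path (N : nat) (X : nat -> R) : Prop :=
  forall i, (1 <= i <= N)%nat -> 0 <= X i.

Definition in_SSS (N J : nat) (t : nat -> R) (x : nat -> R) (a : R -> R -> R)
    (St : strategy) : Prop :=
  (forall n X Y rho, (1 <= n <= N - 1)%nat ->
     (forall i, (1 <= i <= n)%nat -> X i = Y i) -> delta St n X rho = delta St n Y rho) /\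
  (* dependence on the exercise time only once exercise has occurred *)
  (forall n X rho rho', (1 <= n <= N - 1)%nat ->
     (1 <= rho <= N)%nat -> (1 <= rho' <= N)%nat ->
     ((rho <= n)%nat -> rho' = rho) -> ((n < rho)%nat -> (n < rho')%nat) ->
     delta St n X rho = delta St n X rho') /\
  (exists B, forall n X rho, (1 <= n <= N - 1)%nat -> nonneg_path N X ->
     (1 <= rho <= N)%nat -> Rabs (delta St n X rho) <= B) /\
  (forall X rho, nonneg_path N X -> (1 <= rho <= N)%nat ->
     a (X rho) (t rho) <= strat_payoff N J x St X rho).

(* decomposition hbar h (y) = h_0 + sum_{j=0}^J gamma j (y - x_j)^+ for y >= 0 *)
Definition slope (J : nat) (x : nat -> R) (h : nat -> R) (j : nat) : R :=
  if Nat.ltb j J then (h (S j) - h j) / (x (S j) - x j) else h (S J).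

Definition gamma (J : nat) (x : nat -> R) (h : nat -> R) (j : nat) : R :=
  if Nat.eqb j 0 then slope J x h 0 else slope J x h j - slope J x h (j - 1)%nat.

Definition lp_strategy (N J : nat) (x : nat -> R) (z : lpvar) : strategy :=
  Strategy
    (sumR 1 N (fun n => e1 z 0%nat n + e2 z 0%nat n) + v z 0%nat N)
    (fun j n => gamma J x (fun i => e1 z i n) j + gamma J x (fun i => e2 z i n) j
                + (if Nat.eqb n N then gamma J x (fun i => v z i N) j else 0))
    (fun n X rho => if Nat.ltb n rho then dtilde1 J x z n (X n)
                    else dtilde2 J x z n (X n)).

(* The claims [e1], [e2]
   and [v], extended to all prices by linear interpolation, are portfolios of calls, and summation by
   parts against the state prices [phat] shows that their cost is the objective. The constraints (ii)
   and (iii), imposed only at the strikes, extend to all pairs of consecutive prices once the hedge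
   ratios [d1], [d2] are interpolated by the mixed rule, because the one-period hedge is then affine in
   the later price between strikes and at infinity. Summing the one-period inequalities, the [v] terms
   telescope from the exercise date on, and convexity of the payoff with its asymptotic slope puts
   [hbar v] above the payoff at exercise.
   The objective is nonnegative on feasible points: in each period (ii) traps a convex claim between
   [-e1] and [e2], and calls increase with maturity. A coordinate bounded below on a nonempty
   polyhedron attains its infimum, by Fourier-Motzkin elimination; this yields an optimal solution. *)

From Stdlib Require Import Reals Lra Lia List RList Cantor Setoid Morphisms FunctionalExtensionality.
Import ListNotations.
Open Scope R_scope.

(** * Finite sums *)

Lemma sum_lt_ext k f g : (forall i, (i < k)%nat -> f i = g i) -> sum_lt k f = sum_lt k g.
Proof.
  induction k as [|k IH]; intros H; simpl; auto.
  rewrite IH, H; auto; intros; apply H; lia.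
Qed.

Lemma sum_lt_add k f g : sum_lt k (fun i => f i + g i) = sum_lt k f + sum_lt k g.
Proof. induction k as [|k IH]; simpl; [lra|]. rewrite IH. lra. Qed.

Lemma sum_lt_scal k r f : sum_lt k (fun i => r * f i) = r * sum_lt k f.
Proof. induction k as [|k IH]; simpl; [lra|]. rewrite IH. lra. Qed.

Lemma sum_lt_le k f g : (forall i, (i < k)%nat -> f i <= g i) -> sum_lt k f <= sum_lt k g.
Proof.
  induction k as [|k IH]; intros H; simpl; [lra|].
  pose proof (H k ltac:(lia)). pose proof (IH (fun i Hi => H i ltac:(lia))). lra.
Qed.

Lemma sum_lt_const0 k : sum_lt k (fun _ => 0) = 0.
Proof. induction k as [|k IH]; simpl; [|rewrite IH]; lra. Qed.

Lemma sum_lt_eq0 k f : (forall i, (i < k)%nat -> f i = 0) -> sum_lt k f = 0.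
Proof. intros H. rewrite (sum_lt_ext k f (fun _ => 0)) by auto. apply sum_lt_const0. Qed.

Lemma sum_lt_shift k f : sum_lt (S k) f = f 0%nat + sum_lt k (fun i => f (S i)).
Proof. induction k as [|k IH]; simpl in *; [lra|]. rewrite IH. lra. Qed.

Lemma sumR_ext m n f g : (forall i, (m <= i <= n)%nat -> f i = g i) -> sumR m n f = sumR m n g.
Proof. intros H. apply sum_lt_ext. intros. apply H. lia. Qed.

Lemma sumR_add m n f g : sumR m n (fun i => f i + g i) = sumR m n f + sumR m n g.
Proof. apply sum_lt_add. Qed.

Lemma sumR_scal m n r f : sumR m n (fun i => r * f i) = r * sumR m n f.
Proof. apply sum_lt_scal. Qed.

Lemma sumR_sub m n f g : sumR m n (fun i => f i - g i) = sumR m n f - sumR m n g.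
Proof.
  rewrite (sumR_ext m n _ (fun i => f i + (-1) * g i)) by (intros; ring).
  rewrite sumR_add, sumR_scal. ring.
Qed.

Lemma sumR_le m n f g : (forall i, (m <= i <= n)%nat -> f i <= g i) -> sumR m n f <= sumR m n g.
Proof. intros H. apply sum_lt_le. intros. apply H. lia. Qed.

Lemma sumR_eq0 m n f : (forall i, (m <= i <= n)%nat -> f i = 0) -> sumR m n f = 0.
Proof. intros H. apply sum_lt_eq0. intros. apply H. lia. Qed.

Lemma sumR_nonneg m n f : (forall i, (m <= i <= n)%nat -> 0 <= f i) -> 0 <= sumR m n f.
Proof. intros H. rewrite <- (sumR_eq0 m n (fun _ => 0)) by auto. apply sumR_le, H. Qed.

Lemma sumR_empty m n f : (n < m)%nat -> sumR m n f = 0.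
Proof. intros H. unfold sumR. replace (S n - m)%nat with 0%nat by lia. reflexivity. Qed.

Lemma sumR_single m f : sumR m m f = f m.
Proof. unfold sumR. replace (S m - m)%nat with 1%nat by lia. simpl. rewrite Nat.add_0_r. lra. Qed.

Lemma sumR_last m n f : (m <= S n)%nat -> sumR m (S n) f = sumR m n f + f (S n).
Proof.
  intros H. unfold sumR. replace (S (S n) - m)%nat with (S (S n - m)) by lia.
  cbn [sum_lt]. replace (m + (S n - m))%nat with (S n) by lia. reflexivity.
Qed.

Lemma sumR_first m n f : (m <= n)%nat -> sumR m n f = f m + sumR (S m) n f.
Proof.
  intros H. unfold sumR. replace (S n - m)%nat with (S (S n - S m)) by lia.
  rewrite sum_lt_shift, Nat.add_0_r. f_equal. apply sum_lt_ext. intros. f_equal. lia.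
Qed.

Lemma sumR_shift m n f : sumR (S m) (S n) f = sumR m n (fun i => f (S i)).
Proof. unfold sumR. replace (S (S n) - S m)%nat with (S n - m)%nat by lia. reflexivity. Qed.

Lemma sumR_split m k n f : (m <= S k)%nat -> (k <= n)%nat ->
  sumR m n f = sumR m k f + sumR (S k) n f.
Proof.
  intros Hm Hk. induction n as [|n IH].
  - replace k with 0%nat by lia. rewrite (sumR_empty 1 0) by lia. lra.
  - destruct (Nat.eq_dec k (S n)) as [->|Hne].
    + rewrite (sumR_empty (S (S n))) by lia. lra.
    + rewrite !sumR_last, IH by lia. lra.
Qed.

Lemma sum_lt_term_le k f i : (forall j, (j < k)%nat -> 0 <= f j) -> (i < k)%nat ->
  f i <= sum_lt k f.
Proof.
  induction k as [|k IH]; intros H Hi; simpl; [lia|].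
  pose proof (H k ltac:(lia)).
  destruct (Nat.eq_dec i k) as [->|Hne].
  - pose proof (sum_lt_le k (fun _ => 0) f ltac:(intros; apply H; lia)).
    rewrite sum_lt_const0 in *. lra.
  - pose proof (IH (fun j Hj => H j ltac:(lia)) ltac:(lia)). lra.
Qed.

Lemma sumR_term_le m n f i : (forall j, (m <= j <= n)%nat -> 0 <= f j) -> (m <= i <= n)%nat ->
  f i <= sumR m n f.
Proof.
  intros H Hi. replace (f i) with (f (m + (i - m))%nat) by (f_equal; lia).
  apply (sum_lt_term_le _ (fun k => f (m + k)%nat)); [intros; apply H|]; lia.
Qed.

Lemma sumR_indicator m n k r : (m <= k <= n)%nat ->
  sumR m n (fun i => if Nat.eqb i k then r else 0) = r.
Proof.
  intros Hk.
  assert (Hzero : forall p q, (forall i, (p <= i <= q)%nat -> i <> k) ->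
            sumR p q (fun i => if Nat.eqb i k then r else 0) = 0).
  { intros p q H. apply sumR_eq0. intros i Hi.
    rewrite (proj2 (Nat.eqb_neq i k)) by (apply H; lia). reflexivity. }
  rewrite (sumR_split m k n), (Hzero (S k) n) by lia.
  destruct k as [|k].
  - replace m with 0%nat by lia. rewrite sumR_single. simpl. ring.
  - rewrite sumR_last, Hzero, Nat.eqb_refl by lia. ring.
Qed.

(** * Linear interpolation and call portfolios *)

Section Interpolation.
Variables (J : nat) (x : nat -> R).
Hypothesis x_incr : forall j, (j < J)%nat -> x j < x (S j).

Lemma strike_lt i j : (i < j)%nat -> (j <= J)%nat -> x i < x j.
Proof.
  intros Hij HjJ. induction j as [|j IH]; [lia|].
  pose proof (x_incr j ltac:(lia)).
  destruct (Nat.eq_dec i j) as [->|Hne]; [lra|].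
  pose proof (IH ltac:(lia) ltac:(lia)). lra.
Qed.

Lemma strike_le i j : (i <= j)%nat -> (j <= J)%nat -> x i <= x j.
Proof.
  intros Hij HjJ. destruct (Nat.eq_dec i j) as [->|Hne]; [lra|].
  left. apply strike_lt; lia.
Qed.

Lemma hbar_rec_cases h y m j : (j + m = J)%nat -> x j <= y ->
  (exists k, (j <= k < J)%nat /\ x k <= y <= x (S k) /\ hbar_rec J x h y j m = seg x h k y) \/
  (x J <= y /\ hbar_rec J x h y j m = h J + (y - x J) * h (S J)).
Proof.
  revert j. induction m as [|m IH]; intros j Hj Hy; simpl.
  - right. replace j with J in * by lia. auto.
  - destruct (Rle_dec y (x (S j))).
    + left. exists j. repeat split; auto; lia.
    + destruct (IH (S j) ltac:(lia) ltac:(lra)) as [[k [Hk Hseg]]|Htail]; [|auto].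
      left. exists k. split; [lia|auto].
Qed.

Lemma hbar_cases h y : x 0%nat <= y ->
  (exists k, (k < J)%nat /\ x k <= y <= x (S k) /\ hbar J x h y = seg x h k y) \/
  (x J <= y /\ hbar J x h y = h J + (y - x J) * h (S J)).
Proof.
  intros Hy. destruct (hbar_rec_cases h y J 0 ltac:(lia) Hy) as [[k [Hk Hseg]]|Htail]; auto.
  left. exists k. split; [lia|auto].
Qed.

Lemma hbar_seg h m y : (m < J)%nat -> x m < y < x (S m) -> hbar J x h y = seg x h m y.
Proof.
  intros Hm Hy. assert (x 0%nat <= y) by (pose proof (strike_le 0 m ltac:(lia) ltac:(lia)); lra).
  destruct (hbar_cases h y H) as [[k [Hk [Hky E]]]|[HJ _]].
  - destruct (Nat.lt_trichotomy k m) as [Hlt|[->|Hgt]]; auto.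
    + pose proof (strike_le (S k) m ltac:(lia) ltac:(lia)). lra.
    + pose proof (strike_le (S m) k ltac:(lia) ltac:(lia)). lra.
  - pose proof (strike_le (S m) J ltac:(lia) ltac:(lia)). lra.
Qed.

Lemma hbar_tail h y : x J < y -> hbar J x h y = h J + (y - x J) * h (S J).
Proof.
  intros Hy. assert (x 0%nat <= y) by (pose proof (strike_le 0 J ltac:(lia) ltac:(lia)); lra).
  destruct (hbar_cases h y H) as [[k [Hk [Hky _]]]|[_ E]]; auto.
  pose proof (strike_le (S k) J ltac:(lia) ltac:(lia)). lra.
Qed.

Lemma hbar_node h k : (k <= J)%nat -> hbar J x h (x k) = h k.
Proof.
  intros Hk. assert (x 0%nat <= x k) by (apply strike_le; lia).
  destruct (hbar_cases h (x k) H) as [[m [Hm [Hmk E]]]|[HJ E]]; rewrite E.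
  - pose proof (x_incr m Hm).
    destruct (Nat.lt_trichotomy k m) as [Hlt|[->|Hgt]].
    + pose proof (strike_lt k m Hlt ltac:(lia)). lra.
    + unfold seg. field. lra.
    + assert (k = S m) as ->.
      { destruct (Nat.eq_dec k (S m)); auto. pose proof (strike_lt (S m) k ltac:(lia) Hk). lra. }
      unfold seg. field. lra.
  - destruct (Nat.eq_dec k J) as [->|Hne]; [ring|].
    pose proof (strike_lt k J ltac:(lia) ltac:(lia)). lra.
Qed.

Lemma hbar_rec_linear h1 h2 al be y m j :
  hbar_rec J x (fun i => al * h1 i + be * h2 i) y j m =
  al * hbar_rec J x h1 y j m + be * hbar_rec J x h2 y j m.
Proof.
  revert j. induction m as [|m IH]; intros j; simpl; [ring|].
  destruct (Rle_dec y (x (S j))); [unfold seg, Rdiv; ring | apply IH].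
Qed.

Lemma hbar_add h1 h2 y : hbar J x (fun i => h1 i + h2 i) y = hbar J x h1 y + hbar J x h2 y.
Proof.
  unfold hbar. rewrite <- (Rmult_1_l (hbar_rec _ _ h1 _ _ _)), <- (Rmult_1_l (hbar_rec _ _ h2 _ _ _)).
  rewrite <- hbar_rec_linear. f_equal. apply functional_extensionality. intros. ring.
Qed.

Lemma hbar_sub h1 h2 y : hbar J x (fun i => h1 i - h2 i) y = hbar J x h1 y - hbar J x h2 y.
Proof.
  unfold hbar. rewrite <- (Rmult_1_l (hbar_rec _ _ h1 _ _ _)).
  replace (1 * hbar_rec J x h1 y 0 J - hbar_rec J x h2 y 0 J)
    with (1 * hbar_rec J x h1 y 0 J + (-1) * hbar_rec J x h2 y 0 J) by ring.
  rewrite <- hbar_rec_linear. f_equal. apply functional_extensionality. intros. ring.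
Qed.

Lemma hbar_eq0 h y : x 0%nat <= y -> (forall i, (i <= S J)%nat -> h i = 0) -> hbar J x h y = 0.
Proof.
  intros Hy H. destruct (hbar_cases h y Hy) as [[m [Hm [_ E]]]|[_ E]]; rewrite E.
  - unfold seg. rewrite !H by lia. unfold Rdiv. ring.
  - rewrite !H by lia. ring.
Qed.

Lemma sumR_gamma_linear h y k : (k <= J)%nat ->
  sumR 0 k (fun j => gamma J x h j * (y - x j)) = h k - h 0%nat + slope J x h k * (y - x k).
Proof.
  induction k as [|k IH]; intros Hk.
  - rewrite sumR_single. unfold gamma. simpl. ring.
  - rewrite sumR_last, IH by lia. unfold gamma, slope.
    replace (Nat.eqb (S k) 0) with false by reflexivity. replace (S k - 1)%nat with k by lia.
    rewrite (proj2 (Nat.ltb_lt k J)) by lia. pose proof (x_incr k ltac:(lia)).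
    destruct (Nat.ltb (S k) J) eqn:E; [pose proof (x_incr (S k) (proj1 (Nat.ltb_lt _ _) E))|];
      field; lra.
Qed.

Lemma hbar_calls h y : x 0%nat <= y ->
  hbar J x h y = h 0%nat + sumR 0 J (fun j => gamma J x h j * Rmax (y - x j) 0).
Proof.
  intros Hy. destruct (hbar_cases h y Hy) as [[k [Hk [Hky E]]]|[HJ E]]; rewrite E.
  - rewrite (sumR_split 0 k J) by lia. rewrite (sumR_eq0 (S k) J).
    2:{ intros i Hi. pose proof (strike_le (S k) i ltac:(lia) ltac:(lia)). rewrite Rmax_right by lra. ring. }
    rewrite (sumR_ext 0 k _ (fun j => gamma J x h j * (y - x j))).
    2:{ intros i Hi. pose proof (strike_le i k ltac:(lia) ltac:(lia)). rewrite Rmax_left by lra. ring. }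
    rewrite sumR_gamma_linear by lia. unfold slope. rewrite (proj2 (Nat.ltb_lt k J)) by lia.
    pose proof (x_incr k Hk). unfold seg. field. lra.
  - rewrite (sumR_ext 0 J _ (fun j => gamma J x h j * (y - x j))).
    2:{ intros i Hi. pose proof (strike_le i J ltac:(lia) ltac:(lia)). rewrite Rmax_left by lra. ring. }
    rewrite sumR_gamma_linear by lia. unfold slope. rewrite Nat.ltb_irrefl. ring.
Qed.

End Interpolation.

(** * Mixed interpolation of the hedge ratios *)

Section MixedInterpolation.
Variables (J : nat) (x : nat -> R).
Hypothesis x_incr : forall j, (j < J)%nat -> x j < x (S j).

Lemma mix_rec_cases d u tail y m j : (j + m = J)%nat -> x j <= y ->
  (exists i, (j <= i <= J)%nat /\ y = x i /\ mix_rec x d u tail y j m = d i) \/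
  (exists k, (j <= k < J)%nat /\ x k < y < x (S k) /\ mix_rec x d u tail y j m = mix_inner x d u k) \/
  (x J < y /\ mix_rec x d u tail y j m = tail).
Proof.
  revert j. induction m as [|m IH]; intros j Hj Hy; simpl.
  - replace j with J in * by lia. destruct (Rle_dec y (x J)).
    + left. exists J. repeat split; auto; lra.
    + right; right. split; auto; lra.
  - destruct (Rle_dec y (x j)).
    + left. exists j. repeat split; auto; lia || lra.
    + destruct (Rlt_dec y (x (S j))).
      * right; left. exists j. repeat split; auto; lia || lra.
      * destruct (IH (S j) ltac:(lia) ltac:(lra)) as [[i [Hi E]]|[[k [Hk E]]|Htail]]; auto.
        -- left. exists i. split; [lia|auto].
        -- right; left. exists k. split; [lia|auto].
Qed.

Lemma mixinterp_cases d u tail y : x 0%nat <= y ->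
  (exists i, (i <= J)%nat /\ y = x i /\ mixinterp J x d u tail y = d i) \/
  (exists k, (k < J)%nat /\ x k < y < x (S k) /\ mixinterp J x d u tail y = mix_inner x d u k) \/
  (x J < y /\ mixinterp J x d u tail y = tail).
Proof.
  intros Hy.
  destruct (mix_rec_cases d u tail y J 0 ltac:(lia) Hy) as [[i [Hi E]]|[[k [Hk E]]|Htail]]; auto.
  - left. exists i. split; [lia|auto].
  - right; left. exists k. split; [lia|auto].
Qed.

Lemma mixinterp_abs_le d u tail y : x 0%nat <= y ->
  Rabs (mixinterp J x d u tail y) <= sumR 0 J (fun j => Rabs (d j) + Rabs (u j)) + Rabs tail.
Proof.
  intros Hy.
  assert (Hpos : forall j, (0 <= j <= J)%nat -> 0 <= Rabs (d j) + Rabs (u j)).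
  { intros j _. pose proof (Rabs_pos (d j)). pose proof (Rabs_pos (u j)). lra. }
  assert (Hdu : forall i, (i <= J)%nat ->
            Rabs (d i) + Rabs (u i) <= sumR 0 J (fun j => Rabs (d j) + Rabs (u j)) + Rabs tail).
  { intros i Hi. pose proof (sumR_term_le 0 J _ i Hpos ltac:(lia)). pose proof (Rabs_pos tail). lra. }
  destruct (mixinterp_cases d u tail y Hy) as [[i [Hi [_ E]]]|[[k [Hk [_ E]]]|[_ E]]]; rewrite E.
  - pose proof (Hdu i Hi). pose proof (Rabs_pos (u i)). lra.
  - pose proof (Hdu k ltac:(lia)). pose proof (Hdu (S k) ltac:(lia)).
    pose proof (Rabs_pos (u k)). pose proof (Rabs_pos (d k)). pose proof (Rabs_pos (u (S k))).
    unfold mix_inner. destruct (Rle_dec (d k) (u k)); [|destruct (Rle_dec (u k) (d (S k)))]; lra.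
  - pose proof (sumR_nonneg 0 J _ Hpos). lra.
Qed.

Variables (E1 E2 D : nat -> R).
Hypothesis nodes_nonneg : forall j k, (j <= J)%nat -> (k <= J)%nat ->
  0 <= E1 j + E2 k + (x k - x j) * D j.
Hypothesis far_nonneg : forall j, (j <= J)%nat -> 0 <= E2 (S J) + D j.
Hypothesis far_far_nonneg : 0 <= E1 (S J) + E2 (S J).

Let u j := (E1 (S j) - E1 j) / (x (S j) - x j).
Let dmix y := mixinterp J x D u (Rmin (D J) (E1 (S J))) y.

Definition supporting_slope (H d : R) (y : R) : Prop :=
  (forall k, (k <= J)%nat -> 0 <= H + E2 k + d * (x k - y)) /\ 0 <= E2 (S J) + d.

Lemma mix_inner_supporting m y : (m < J)%nat -> x m < y < x (S m) ->
  supporting_slope (E1 m + u m * (y - x m)) (mix_inner x D u m) y.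
Proof.
  intros Hm Hy. pose proof (x_incr m Hm).
  assert (HuS : E1 m + u m * (x (S m) - x m) = E1 (S m)) by (unfold u; field; lra).
  unfold mix_inner, supporting_slope. destruct (Rle_dec (D m) (u m)).
  - split; [|apply far_nonneg; lia]. intros k Hk. pose proof (nodes_nonneg m k ltac:(lia) Hk).
    assert (0 <= (u m - D m) * (y - x m)) by (apply Rmult_le_pos; lra). nra.
  - destruct (Rle_dec (u m) (D (S m))).
    + split; [|apply far_nonneg; lia]. intros k Hk. pose proof (nodes_nonneg (S m) k ltac:(lia) Hk).
      assert (0 <= (D (S m) - u m) * (x (S m) - y)) by (apply Rmult_le_pos; lra). nra.
    + split; [|pose proof (far_nonneg (S m) ltac:(lia)); lra]. intros k Hk.
      destruct (Compare_dec.le_lt_dec k m) as [Hkm|Hmk].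
      * pose proof (nodes_nonneg m k ltac:(lia) Hk). pose proof (strike_le J x x_incr k m Hkm ltac:(lia)).
        assert (0 <= (D m - u m) * (x m - x k)) by (apply Rmult_le_pos; lra). nra.
      * pose proof (nodes_nonneg (S m) k ltac:(lia) Hk).
        pose proof (strike_le J x x_incr (S m) k ltac:(lia) Hk).
        assert (0 <= (u m - D (S m)) * (x k - x (S m))) by (apply Rmult_le_pos; lra). nra.
Qed.

Lemma mixinterp_supporting y : x 0%nat <= y -> supporting_slope (hbar J x E1 y) (dmix y) y.
Proof.
  intros Hy. unfold dmix.
  destruct (mixinterp_cases D u (Rmin (D J) (E1 (S J))) y Hy)
    as [[i [Hi [-> E]]]|[[m [Hm [Hym E]]]|[HyJ E]]]; rewrite E.
  - rewrite hbar_node by auto. split; [|apply far_nonneg; auto].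
    intros k Hk. pose proof (nodes_nonneg i k Hi Hk). lra.
  - rewrite (hbar_seg J x x_incr E1 m y Hm Hym).
    replace (seg x E1 m y) with (E1 m + u m * (y - x m))
      by (pose proof (x_incr m Hm); unfold seg, u; field; lra).
    apply mix_inner_supporting; auto.
  - rewrite hbar_tail by auto. pose proof (Rmin_l (D J) (E1 (S J))). pose proof (Rmin_r (D J) (E1 (S J))).
    split.
    + intros k Hk. pose proof (nodes_nonneg J k ltac:(lia) Hk).
      pose proof (strike_le J x x_incr k J Hk ltac:(lia)).
      assert (0 <= (D J - Rmin (D J) (E1 (S J))) * (x J - x k)) by (apply Rmult_le_pos; lra).
      assert (0 <= (E1 (S J) - Rmin (D J) (E1 (S J))) * (y - x J)) by (apply Rmult_le_pos; lra).
      nra.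
    + unfold Rmin. destruct (Rle_dec (D J) (E1 (S J))); [apply far_nonneg; lia | lra].
Qed.

(* Between consecutive strikes the expression is affine in [y'], so it suffices to check it at the
   strikes and for [y' -> oo], which is what [supporting_slope] provides. *)
Lemma mixed_hedge_nonneg y y' : x 0%nat <= y -> x 0%nat <= y' ->
  0 <= hbar J x E1 y + hbar J x E2 y' + dmix y * (y' - y).
Proof.
  intros Hy Hy'. destruct (mixinterp_supporting y Hy) as [Hnodes Hfar].
  set (H0 := hbar J x E1 y) in *. set (dl := dmix y) in *.
  destruct (hbar_cases J x E2 y' Hy') as [[k [Hk [Hky E]]]|[HyJ E]]; rewrite E.
  - pose proof (x_incr k Hk). pose proof (Hnodes k ltac:(lia)). pose proof (Hnodes (S k) ltac:(lia)).
    replace (H0 + seg x E2 k y' + dl * (y' - y)) with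
      (((x (S k) - y') * (H0 + E2 k + dl * (x k - y))
        + (y' - x k) * (H0 + E2 (S k) + dl * (x (S k) - y))) / (x (S k) - x k))
      by (unfold seg; field; lra).
    apply Rmult_le_pos; [|left; apply Rinv_0_lt_compat; lra].
    assert (0 <= (x (S k) - y') * (H0 + E2 k + dl * (x k - y))) by (apply Rmult_le_pos; lra).
    assert (0 <= (y' - x k) * (H0 + E2 (S k) + dl * (x (S k) - y))) by (apply Rmult_le_pos; lra).
    lra.
  - pose proof (Hnodes J ltac:(lia)).
    assert (0 <= (E2 (S J) + dl) * (y' - x J)) by (apply Rmult_le_pos; lra). nra.
Qed.
End MixedInterpolation.

(** * Convex payoffs *)

Section Convexity.
Variables (A : R -> R) (l : R).
Hypothesis A_convex : forall y z lam, 0 <= y -> 0 <= z -> 0 <= lam <= 1 ->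
  A (lam * y + (1 - lam) * z) <= lam * A y + (1 - lam) * A z.

Lemma convex_chord_le p y w : 0 <= p < y -> y < w ->
  (A y - A p) * (w - p) <= (A w - A p) * (y - p).
Proof.
  intros Hpy Hyw. set (lam := (w - y) / (w - p)).
  assert (Hlam : 0 <= lam <= 1).
  { unfold lam. split.
    - apply Rmult_le_pos; [lra|left; apply Rinv_0_lt_compat; lra].
    - apply Rmult_le_reg_r with (w - p); [lra|]. field_simplify; lra. }
  pose proof (A_convex p w lam ltac:(lra) ltac:(lra) Hlam) as Hc.
  replace (lam * p + (1 - lam) * w) with y in Hc by (unfold lam; field; lra).
  assert (Hw : (1 - lam) * (w - p) = y - p) by (unfold lam; field; lra).
  assert (Hd : A y - A p <= (1 - lam) * (A w - A p)) by lra.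
  apply (Rmult_le_compat_r (w - p)) in Hd; [|lra].
  replace ((1 - lam) * (A w - A p) * (w - p)) with ((A w - A p) * ((1 - lam) * (w - p))) in Hd by ring.
  rewrite Hw in Hd. exact Hd.
Qed.

Hypothesis A_slope : forall eps, 0 < eps -> exists M, forall y, M < y -> Rabs (A y / y - l) < eps.

(* A chord steeper than the asymptotic slope [l] would force [A w / w] to exceed [l] for large [w]. *)
Lemma convex_le_asymptote p y : 0 <= p <= y -> A y <= A p + l * (y - p).
Proof.
  intros Hpy. destruct (Rle_dec (A y) (A p + l * (y - p))) as [|Hgt]; auto. exfalso.
  assert (Hp_y : p < y) by (destruct (Req_dec p y); [subst; lra | lra]).
  set (s := (A y - A p) / (y - p)).
  assert (Hs : A y - A p = s * (y - p)) by (unfold s; field; lra).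
  assert (Hsl : l < s) by (apply Rmult_lt_reg_r with (y - p); lra).
  set (eps := (s - l) / 2). assert (Heps : 0 < eps) by (unfold eps; lra).
  destruct (A_slope eps Heps) as [M HM].
  set (w := Rmax M y + 1 + Rabs (A p - s * p) / eps).
  assert (Hq : 0 <= Rabs (A p - s * p) / eps)
    by (apply Rmult_le_pos; [apply Rabs_pos | left; apply Rinv_0_lt_compat; lra]).
  pose proof (Rmax_l M y). pose proof (Rmax_r M y).
  assert (Hw : Rabs (A p - s * p) < eps * w).
  { replace (Rabs (A p - s * p)) with (eps * (Rabs (A p - s * p) / eps)) by (field; lra).
    unfold w. nra. }
  pose proof (convex_chord_le p y w ltac:(lra) ltac:(unfold w; lra)) as Hchord.
  rewrite Hs in Hchord.
  assert (Hlow : s * (w - p) <= A w - A p) by (apply Rmult_le_reg_r with (y - p); lra).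
  assert (Hup : A w < (l + eps) * w).
  { specialize (HM w ltac:(unfold w; lra)). apply Rabs_def2 in HM.
    replace (A w) with (A w / w * w) by (field; unfold w; lra).
    apply Rmult_lt_compat_r; [unfold w|]; lra. }
  pose proof (Rle_abs (- (A p - s * p))). rewrite Rabs_Ropp in *.
  assert (s - l - eps = eps) by (unfold eps; field). nra.
Qed.
End Convexity.

Lemma hbar_ge_convex J x (A : R -> R) (l : R) (v : nat -> R) y :
  (forall j, (j < J)%nat -> x j < x (S j)) -> x 0%nat = 0 ->
  (forall y z lam, 0 <= y -> 0 <= z -> 0 <= lam <= 1 ->
     A (lam * y + (1 - lam) * z) <= lam * A y + (1 - lam) * A z) ->
  (forall eps, 0 < eps -> exists M, forall y, M < y -> Rabs (A y / y - l) < eps) ->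
  (forall j, (j <= J)%nat -> A (x j) <= v j) -> l <= v (S J) ->
  0 <= y -> A y <= hbar J x v y.
Proof.
  intros x_incr x0 Hconv Hslope Hv HvJ Hy.
  destruct (hbar_cases J x v y ltac:(lra)) as [[k [Hk [Hky E]]]|[HyJ E]]; rewrite E.
  - pose proof (x_incr k Hk). pose proof (strike_le J x x_incr 0 k ltac:(lia) ltac:(lia)).
    set (lam := (x (S k) - y) / (x (S k) - x k)).
    assert (Hlam : 0 <= lam <= 1).
    { unfold lam. split.
      - apply Rmult_le_pos; [lra|left; apply Rinv_0_lt_compat; lra].
      - apply Rmult_le_reg_r with (x (S k) - x k); [lra|]. field_simplify; lra. }
    pose proof (Hconv (x k) (x (S k)) lam ltac:(lra) ltac:(lra) Hlam) as Hc.
    replace (lam * x k + (1 - lam) * x (S k)) with y in Hc by (unfold lam; field; lra).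
    replace (seg x v k y) with (lam * v k + (1 - lam) * v (S k)) by (unfold seg, lam; field; lra).
    pose proof (Hv k ltac:(lia)). pose proof (Hv (S k) ltac:(lia)).
    assert (lam * A (x k) <= lam * v k) by (apply Rmult_le_compat_l; lra).
    assert ((1 - lam) * A (x (S k)) <= (1 - lam) * v (S k)) by (apply Rmult_le_compat_l; lra). lra.
  - pose proof (strike_le J x x_incr 0 J ltac:(lia) ltac:(lia)).
    pose proof (convex_le_asymptote A l Hconv Hslope (x J) y ltac:(lra)). pose proof (Hv J ltac:(lia)).
    assert (l * (y - x J) <= (y - x J) * v (S J)) by nra. lra.
Qed.

(** * State prices *)

Lemma sum_lt_by_parts K h D : (1 <= K)%nat ->
  sum_lt K (fun j => (h (S j) - h j) * D j) =
  - h 0%nat * D 0%nat + sumR 1 (K - 1) (fun j => h j * (D (j - 1)%nat - D j)) + h K * D (K - 1)%nat.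
Proof.
  induction K as [|K IH]; intros HK; [lia|].
  destruct (Nat.eq_dec K 0) as [->|HK0].
  - simpl. rewrite sumR_empty by lia. ring.
  - cbn [sum_lt]. rewrite IH by lia. destruct K as [|K]; [lia|].
    replace (S (S K) - 1)%nat with (S K) by lia. replace (S K - 1)%nat with K by lia.
    rewrite (sumR_last 1 K) by lia. replace (S K - 1)%nat with K by lia. ring.
Qed.

Section Pricing.
Variables (J : nat) (s0 : R) (x : nat -> R) (c : nat -> nat -> R) (n : nat).
Hypothesis J_pos : (1 <= J)%nat.
Hypothesis x_incr : forall j, (j < J)%nat -> x j < x (S j).
Hypothesis x0 : x 0%nat = 0.
Hypothesis c0 : c 0%nat n = s0.

Let D j := (c j n - c (S j) n) / (x (S j) - x j).

Lemma sumR_gamma_calls h k : (k <= J)%nat ->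
  sumR 0 k (fun j => gamma J x h j * c j n) =
  sum_lt k (fun j => slope J x h j * (c j n - c (S j) n)) + slope J x h k * c k n.
Proof.
  induction k as [|k IH]; intros Hk.
  - rewrite sumR_single. unfold gamma. simpl. ring.
  - rewrite sumR_last, IH by lia. unfold gamma.
    replace (Nat.eqb (S k) 0) with false by reflexivity. replace (S k - 1)%nat with k by lia.
    cbn [sum_lt]. ring.
Qed.

(* Summation by parts: the state-price value of [h] is the cost of the call portfolio paying [hbar h]. *)
Lemma sumR_phat h :
  sumR 0 (S J) (fun j => h j * phat J s0 x c j n) = h 0%nat + sumR 0 J (fun j => gamma J x h j * c j n).
Proof.
  rewrite sumR_gamma_calls by lia.
  rewrite (sum_lt_ext J _ (fun j => (h (S j) - h j) * D j)).
  2:{ intros i Hi. unfold slope, D. rewrite (proj2 (Nat.ltb_lt i J)) by auto.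
      pose proof (x_incr i Hi). field. lra. }
  rewrite sum_lt_by_parts by lia. unfold slope. rewrite Nat.ltb_irrefl.
  rewrite sumR_last, sumR_first by lia.
  replace J with (S (J - 1)) at 2 by lia. rewrite sumR_last by lia. replace (S (J - 1)) with J by lia.
  rewrite (sumR_ext 1 (J - 1) _ (fun j => h j * (D (j - 1)%nat - D j))).
  2:{ intros [|i] Hi; [lia|]. unfold phat, D. cbn [Nat.eqb].
      rewrite (proj2 (Nat.ltb_lt (S i) J)) by lia. replace (S i - 1)%nat with i by lia. reflexivity. }
  assert (P0 : phat J s0 x c 0 n = 1 - D 0%nat).
  { unfold phat, D. simpl. rewrite c0, x0. do 2 f_equal. ring. }
  assert (PJ : phat J s0 x c J n = D (J - 1)%nat).
  { unfold phat, D. rewrite (proj2 (Nat.eqb_neq J 0)) by lia. rewrite Nat.ltb_irrefl, Nat.eqb_refl.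
    replace (S (J - 1)) with J by lia. reflexivity. }
  assert (PSJ : phat J s0 x c (S J) n = c J n).
  { unfold phat. rewrite (proj2 (Nat.eqb_neq (S J) 0)), (proj2 (Nat.ltb_ge (S J) J)),
      (proj2 (Nat.eqb_neq (S J) J)), Nat.eqb_refl by lia. reflexivity. }
  rewrite P0, PJ, PSJ. ring.
Qed.
End Pricing.

(** * The strategy built from a feasible point *)

Lemma sumR_telescope_from (V : nat -> R) rho K : (1 <= rho <= S K)%nat ->
  sumR 1 K (fun n => if Nat.ltb n rho then 0 else V n - V (S n)) = V rho - V (S K).
Proof.
  induction K as [|K IH]; intros Hr.
  - rewrite sumR_empty by lia. replace rho with 1%nat by lia. ring.
  - rewrite sumR_last by lia. destruct (Nat.eq_dec rho (S (S K))) as [->|Hne].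
    + rewrite (proj2 (Nat.ltb_lt (S K) (S (S K)))) by lia. rewrite sumR_eq0; [ring|].
      intros i Hi. rewrite (proj2 (Nat.ltb_lt i (S (S K)))) by lia. reflexivity.
    + rewrite IH, (proj2 (Nat.ltb_ge (S K) rho)) by lia. ring.
Qed.

Lemma slope_add J x h1 h2 j :
  slope J x (fun i => h1 i + h2 i) j = slope J x h1 j + slope J x h2 j.
Proof. unfold slope. destruct (Nat.ltb j J); [unfold Rdiv; ring | reflexivity]. Qed.

Lemma gamma_add J x h1 h2 j :
  gamma J x (fun i => h1 i + h2 i) j = gamma J x h1 j + gamma J x h2 j.
Proof. unfold gamma. rewrite !slope_add. destruct j; cbn [Nat.eqb]; ring. Qed.

Lemma gamma_if J x (b : bool) h j :
  gamma J x (fun i => if b then h i else 0) j = if b then gamma J x h j else 0.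
Proof.
  destruct b; [reflexivity|].
  unfold gamma, slope. destruct j; cbn [Nat.eqb]; repeat destruct (Nat.ltb _ J); unfold Rdiv; ring.
Qed.

Section Strategy.
Variables (N J : nat) (t : nat -> R) (s0 : R) (x : nat -> R) (c : nat -> nat -> R)
  (a : R -> R -> R) (l : nat -> R).
Hypothesis market : market_assumptions N J t s0 x c.

Let N_pos : (1 <= N)%nat.
Proof. now destruct market. Qed.
Let J_pos : (1 <= J)%nat.
Proof. now destruct market as (_ & H & _). Qed.
Let x0 : x 0%nat = 0.
Proof. now destruct market as (_ & _ & _ & _ & _ & H & _). Qed.
Let x_incr : forall j, (j < J)%nat -> x j < x (S j).
Proof. now destruct market as (_ & _ & _ & _ & _ & _ & H & _). Qed.
Let c0 n : (1 <= n <= N)%nat -> c 0%nat n = s0.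
Proof. intros Hn. destruct market as (_ & _ & _ & _ & _ & _ & _ & H & _). apply (H n Hn). Qed.

Variable z : lpvar.

Let held_claim n i := e1 z i n + e2 z i n + (if Nat.eqb n N then v z i N else 0).

Lemma lp_strategy_calls j n : calls (lp_strategy N J x z) j n = gamma J x (held_claim n) j.
Proof. unfold held_claim. cbn [calls lp_strategy]. rewrite !gamma_add, gamma_if. reflexivity. Qed.

Lemma sumR_held_claim_phat n :
  sumR 0 (S J) (fun j => held_claim n j * phat J s0 x c j n) =
  sumR 0 (S J) (fun j => (e1 z j n + e2 z j n) * phat J s0 x c j n)
  + (if Nat.eqb n N then sumR 0 (S J) (fun j => v z j N * phat J s0 x c j N) else 0).
Proof.
  unfold held_claim. destruct (Nat.eqb n N) eqn:E.
  - apply Nat.eqb_eq in E. subst n. rewrite <- sumR_add. apply sumR_ext. intros. ring.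
  - rewrite Rplus_0_r. apply sumR_ext. intros. ring.
Qed.

Lemma lp_strategy_cost : cost N J c (lp_strategy N J x z) = lp_objective N J s0 x c z.
Proof.
  assert (Hcalls : forall n, (1 <= n <= N)%nat ->
    sumR 0 J (fun j => calls (lp_strategy N J x z) j n * c j n)
    = sumR 0 (S J) (fun j => held_claim n j * phat J s0 x c j n) - held_claim n 0%nat).
  { intros n Hn. rewrite (sumR_phat J s0 x c n J_pos x_incr x0 (c0 n Hn)).
    rewrite (sumR_ext 0 J _ (fun j => gamma J x (held_claim n) j * c j n))
      by (intros; rewrite lp_strategy_calls; reflexivity). ring. }
  unfold cost. rewrite (sumR_ext 1 N _ _ Hcalls).
  rewrite (sumR_ext 1 N _ (fun n => (sumR 0 (S J) (fun j => (e1 z j n + e2 z j n) * phat J s0 x c j n)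
      - (e1 z 0%nat n + e2 z 0%nat n))
      + (if Nat.eqb n N then sumR 0 (S J) (fun j => v z j N * phat J s0 x c j N) - v z 0%nat N else 0))).
  2:{ intros n _. rewrite sumR_held_claim_phat. unfold held_claim. destruct (Nat.eqb n N); ring. }
  rewrite sumR_add, sumR_sub, sumR_indicator by lia.
  unfold lp_objective. cbn [bond lp_strategy]. ring.
Qed.
Hypothesis feasible : lp_feasible N J t x a l z.

Lemma lp_strategy_payoff X rho : nonneg_path N X ->
  strat_payoff N J x (lp_strategy N J x z) X rho =
  sumR 1 (N - 1) (fun n => hbar J x (fun i => e1 z i n) (X n) + hbar J x (fun i => e2 z i (S n)) (X (S n))
                           + delta (lp_strategy N J x z) n X rho * (X (S n) - X n))
  + hbar J x (fun i => v z i N) (X N).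
Proof.
  intros HX. destruct feasible as [Hbd _].
  assert (HX0 : forall n, (1 <= n <= N)%nat -> x 0%nat <= X n) by (intros; rewrite x0; apply HX; auto).
  assert (Hcalls : forall n, (1 <= n <= N)%nat ->
    sumR 0 J (fun j => calls (lp_strategy N J x z) j n * Rmax (X n - x j) 0)
    = hbar J x (fun i => e1 z i n) (X n) + hbar J x (fun i => e2 z i n) (X n) - (e1 z 0%nat n + e2 z 0%nat n)
      + (if Nat.eqb n N then hbar J x (fun i => v z i N) (X N) - v z 0%nat N else 0)).
  { intros n Hn. rewrite (sumR_ext 0 J _ (fun j => gamma J x (held_claim n) j * Rmax (X n - x j) 0))
      by (intros; rewrite lp_strategy_calls; reflexivity).
    assert (Hc := hbar_calls J x x_incr (held_claim n) (X n) (HX0 n Hn)). unfold held_claim in Hc at 1.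
    rewrite !hbar_add in Hc. unfold held_claim in *. destruct (Nat.eqb n N) eqn:E.
    - apply Nat.eqb_eq in E. subst n. lra.
    - rewrite (hbar_eq0 J x (fun _ => 0)) in Hc by auto. lra. }
  unfold strat_payoff. rewrite (sumR_ext 1 N _ _ Hcalls).
  rewrite !sumR_add, sumR_indicator, !sumR_sub, !sumR_add by lia.
  assert (Hlast : sumR 1 N (fun n => hbar J x (fun i => e1 z i n) (X n))
                  = sumR 1 (N - 1) (fun n => hbar J x (fun i => e1 z i n) (X n))).
  { replace N with (S (N - 1)) at 1 by lia. rewrite sumR_last by lia. replace (S (N - 1)) with N by lia.
    rewrite (hbar_eq0 J x) by (auto; intros i Hi; apply (Hbd i Hi)). ring. }
  assert (Hfirst : sumR 1 N (fun n => hbar J x (fun i => e2 z i n) (X n))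
                   = sumR 1 (N - 1) (fun n => hbar J x (fun i => e2 z i (S n)) (X (S n)))).
  { rewrite sumR_first by lia. replace N with (S (N - 1)) at 1 by lia. rewrite sumR_shift.
    rewrite (hbar_eq0 J x) by (auto; intros i Hi; apply (Hbd i Hi)). ring. }
  rewrite Hlast, Hfirst. cbn [bond lp_strategy]. rewrite sumR_add. ring.
Qed.

Lemma lp_strategy_step X rho n : nonneg_path N X -> (1 <= n <= N - 1)%nat ->
  (if Nat.ltb n rho then 0
   else hbar J x (fun i => v z i n) (X n) - hbar J x (fun i => v z i (S n)) (X (S n)))
  <= hbar J x (fun i => e1 z i n) (X n) + hbar J x (fun i => e2 z i (S n)) (X (S n))
     + delta (lp_strategy N J x z) n X rho * (X (S n) - X n).
Proof.
  intros HX Hn. destruct feasible as (_ & _ & _ & Hii & Hiii).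
  assert (Hy : x 0%nat <= X n) by (rewrite x0; apply HX; lia).
  assert (Hy' : x 0%nat <= X (S n)) by (rewrite x0; apply HX; lia).
  cbn [delta lp_strategy]. destruct (Nat.ltb n rho).
  - destruct (Hii n Hn) as (A1 & _ & A3 & A4).
    exact (mixed_hedge_nonneg J x x_incr _ _ (fun j => d1 z j n) A1 A3 A4 _ _ Hy Hy').
  - destruct (Hiii n Hn) as (A1 & _ & A3 & A4).
    pose proof (mixed_hedge_nonneg J x x_incr (fun j => e1 z j n - v z j n)
      (fun j => e2 z j (S n) + v z j (S n)) (fun j => d2 z j n)
      ltac:(intros j k Hj Hk; specialize (A1 j k Hj Hk); lra)
      ltac:(intros j Hj; specialize (A3 j Hj); lra) ltac:(lra) _ _ Hy Hy') as Hh.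
    rewrite hbar_sub, hbar_add in Hh. unfold dtilde2, u2. lra.
Qed.

Hypothesis payoff : payoff_assumptions N t a l.

Lemma lp_strategy_superreplicates X rho : nonneg_path N X -> (1 <= rho <= N)%nat ->
  a (X rho) (t rho) <= strat_payoff N J x (lp_strategy N J x z) X rho.
Proof.
  intros HX Hr. rewrite lp_strategy_payoff by auto.
  pose proof (sumR_le 1 (N - 1) _ _ (fun n Hn => lp_strategy_step X rho n HX Hn)) as Hsteps.
  rewrite (sumR_telescope_from (fun n => hbar J x (fun i => v z i n) (X n))) in Hsteps by lia.
  replace (S (N - 1)) with N in Hsteps by lia.
  assert (HaV : a (X rho) (t rho) <= hbar J x (fun i => v z i rho) (X rho)).
  { destruct (payoff rho Hr) as (_ & Hconv & Hslope).
    destruct feasible as (_ & _ & Hi & _). destruct (Hi rho Hr) as [Hv HvJ].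
    apply (hbar_ge_convex J x (fun y => a y (t rho)) (l rho)); auto. }
  lra.
Qed.

Lemma lp_strategy_in_SSS : in_SSS N J t x a (lp_strategy N J x z).
Proof.
  split; [|split; [|split]].
  - intros n X Y rho Hn HXY. cbn [delta lp_strategy]. rewrite (HXY n) by lia. reflexivity.
  - intros n X rho rho' Hn Hr Hr' Hexer Hlive. cbn [delta lp_strategy].
    destruct (Nat.ltb n rho) eqn:E.
    + apply Nat.ltb_lt in E. rewrite (proj2 (Nat.ltb_lt n rho')) by auto. reflexivity.
    + rewrite (Hexer (proj1 (Nat.ltb_ge _ _) E)), E. reflexivity.
  - set (B d u tail := sumR 0 J (fun j => Rabs (d j) + Rabs (u j)) + Rabs tail).
    assert (HB : forall d u tail, 0 <= B d u tail).
    { intros. unfold B. pose proof (Rabs_pos tail).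
      assert (0 <= sumR 0 J (fun j => Rabs (d j) + Rabs (u j))); [|lra].
      apply sumR_nonneg. intros. pose proof (Rabs_pos (d i)). pose proof (Rabs_pos (u i)). lra. }
    set (Bn n := B (fun j => d1 z j n) (u1 x z n) (Rmin (d1 z J n) (e1 z (S J) n))
               + B (fun j => d2 z j n) (u2 x z n) (Rmin (d2 z J n) (e1 z (S J) n - v z (S J) n))).
    assert (HBn : forall n, 0 <= Bn n) by (intros; unfold Bn; pose proof (HB (fun j => d1 z j n));
      pose proof (HB (fun j => d2 z j n)); eauto using Rplus_le_le_0_compat).
    exists (sumR 1 (N - 1) Bn). intros n X rho Hn HX Hr.
    assert (Hy : x 0%nat <= X n) by (rewrite x0; apply HX; lia).
    pose proof (sumR_term_le 1 (N - 1) Bn n (fun j _ => HBn j) Hn) as Hle.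
    pose proof (mixinterp_abs_le J x (fun j => d1 z j n) (u1 x z n)
      (Rmin (d1 z J n) (e1 z (S J) n)) (X n) Hy) as Hd1.
    pose proof (mixinterp_abs_le J x (fun j => d2 z j n) (u2 x z n)
      (Rmin (d2 z J n) (e1 z (S J) n - v z (S J) n)) (X n) Hy) as Hd2.
    pose proof (HB (fun j => d1 z j n) (u1 x z n) (Rmin (d1 z J n) (e1 z (S J) n))).
    pose proof (HB (fun j => d2 z j n) (u2 x z n) (Rmin (d2 z J n) (e1 z (S J) n - v z (S J) n))).
    unfold Bn, B in *. cbn [delta lp_strategy]. unfold dtilde1, dtilde2.
    destruct (Nat.ltb n rho); lra.
  - intros X rho HX Hr. apply lp_strategy_superreplicates; auto.
Qed.


End Strategy.

(** * Nonnegativity of the objective *)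

Fixpoint max_upto (k : nat) (g : nat -> R) : R :=
  match k with O => g 0%nat | S k' => Rmax (max_upto k' g) (g (S k')) end.

Lemma max_upto_ge k g i : (i <= k)%nat -> g i <= max_upto k g.
Proof.
  induction k as [|k IH]; intros Hi; simpl.
  - replace i with 0%nat by lia. lra.
  - destruct (Nat.eq_dec i (S k)) as [->|Hne]; [apply Rmax_r|].
    eapply Rle_trans; [apply IH; lia | apply Rmax_l].
Qed.

Lemma max_upto_attained k g : exists i, (i <= k)%nat /\ max_upto k g = g i.
Proof.
  induction k as [|k [i [Hi E]]]; simpl; [exists 0%nat; auto|].
  unfold Rmax. destruct (Rle_dec (max_upto k g) (g (S k))).
  - exists (S k). auto.
  - exists i. split; [lia | auto].
Qed.

Lemma gamma_nonneg_of_support J x h :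
  (forall j, (j < J)%nat -> x j < x (S j)) ->
  (forall j, (j <= J)%nat -> exists b,
     (forall k, (k <= J)%nat -> h j + b * (x k - x j) <= h k) /\ b <= h (S J)) ->
  forall j, (1 <= j <= J)%nat -> 0 <= gamma J x h j.
Proof.
  intros x_incr Hsupp j Hj. destruct (Hsupp j ltac:(lia)) as [b [Hb HbJ]].
  unfold gamma, slope. rewrite (proj2 (Nat.eqb_neq j 0)), (proj2 (Nat.ltb_lt (j - 1) J)) by lia.
  replace (S (j - 1)) with j by lia.
  pose proof (x_incr (j - 1)%nat ltac:(lia)) as Hx. replace (S (j - 1)) with j in Hx by lia.
  assert (Hleft : (h j - h (j - 1)%nat) / (x j - x (j - 1)%nat) <= b).
  { pose proof (Hb (j - 1)%nat ltac:(lia)).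
    apply (Rmult_le_reg_r (x j - x (j - 1)%nat)); [lra|]. unfold Rdiv.
    rewrite Rmult_assoc, Rinv_l by lra. lra. }
  destruct (Nat.ltb j J) eqn:EJ; [|lra].
  apply Nat.ltb_lt in EJ. pose proof (x_incr j EJ). pose proof (Hb (S j) ltac:(lia)).
  assert (b <= (h (S j) - h j) / (x (S j) - x j)); [|lra].
  apply (Rmult_le_reg_r (x (S j) - x j)); [lra|]. unfold Rdiv.
  rewrite Rmult_assoc, Rinv_l by lra. lra.
Qed.

Section LowerBound.
Variables (N J : nat) (t : nat -> R) (s0 : R) (x : nat -> R) (c : nat -> nat -> R)
  (a : R -> R -> R) (l : nat -> R).
Hypothesis market : market_assumptions N J t s0 x c.

Lemma phat_pos j n : (1 <= n <= N)%nat -> (j <= S J)%nat -> 0 < phat J s0 x c j n.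
Proof.
  destruct market as (_ & _ & _ & _ & _ & _ & _ & Hc & _). intros Hn Hj.
  destruct (Hc n Hn) as (_ & _ & HcJ & Hbutterfly0 & Hbutterfly & HsJ). unfold phat.
  destruct (Nat.eqb j 0) eqn:E0; [lra|]. apply Nat.eqb_neq in E0.
  destruct (Nat.ltb j J) eqn:E1.
  - apply Nat.ltb_lt in E1. specialize (Hbutterfly j ltac:(lia)). lra.
  - apply Nat.ltb_ge in E1. destruct (Nat.eqb j J) eqn:E2; auto.
    apply Nat.eqb_neq in E2. replace j with (S J) by lia. rewrite Nat.eqb_refl. auto.
Qed.

Lemma phat_last n : phat J s0 x c (S J) n = c J n.
Proof.
  unfold phat. rewrite (proj2 (Nat.eqb_neq (S J) 0)), (proj2 (Nat.ltb_ge (S J) J)),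
    (proj2 (Nat.eqb_neq (S J) J)), Nat.eqb_refl by lia. reflexivity.
Qed.

(* Calendar spreads of calls are nonnegative, so a convex claim is worth more at the later maturity. *)
Lemma phat_increment_nonneg h n : (1 <= n <= N - 1)%nat ->
  (forall j, (1 <= j <= J)%nat -> 0 <= gamma J x h j) ->
  0 <= sumR 0 (S J) (fun j => h j * (phat J s0 x c j (S n) - phat J s0 x c j n)).
Proof.
  destruct market as (_ & HJ & _ & _ & _ & Hx0 & Hxinc & Hc & Hcal). intros Hn Hg.
  destruct (Hc n ltac:(lia)) as [C0 _]. destruct (Hc (S n) ltac:(lia)) as [C0' _].
  rewrite (sumR_ext 0 (S J) _ (fun j => h j * phat J s0 x c j (S n) - h j * phat J s0 x c j n))
    by (intros; ring).
  rewrite sumR_sub, (sumR_phat J s0 x c n), (sumR_phat J s0 x c (S n)) by auto.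
  assert (Hdiff : sumR 0 J (fun j => gamma J x h j * c j (S n)) - sumR 0 J (fun j => gamma J x h j * c j n)
                 = sumR 0 J (fun j => gamma J x h j * (c j (S n) - c j n)))
    by (rewrite <- sumR_sub; apply sumR_ext; intros; ring).
  assert (0 <= sumR 0 J (fun j => gamma J x h j * (c j (S n) - c j n))); [|lra].
  apply sumR_nonneg. intros [|j] Hj.
  - rewrite C0, C0'. lra.
  - apply Rmult_le_pos; [apply Hg; lia|]. pose proof (Hcal (S j) n ltac:(lia) ltac:(lia)). lra.
Qed.

(* Constraints (ii) say that the piecewise-affine function [h] below sits between [-e1] at [t_n] and
   [e2] at [t_(n+1)], and [h] is convex, so the period's static claims cost at least a calendar spread. *)
Lemma lp_period_nonneg z n : lp_feasible N J t x a l z -> (1 <= n <= N - 1)%nat ->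
  0 <= sumR 0 (S J) (fun j => e1 z j n * phat J s0 x c j n)
       + sumR 0 (S J) (fun j => e2 z j (S n) * phat J s0 x c j (S n)).
Proof.
  pose proof market as (_ & HJ & _ & _ & _ & _ & Hxinc & _ & Hcal).
  intros (_ & _ & _ & Hii & _) Hn. destruct (Hii n Hn) as (A1 & _ & A3 & A4).
  set (g k i := - e1 z i n - d1 z i n * (x k - x i)).
  set (h k := if Nat.leb k J then max_upto J (g k) else max_upto J (fun i => - d1 z i n)).
  assert (h_le_e2 : forall k, (k <= J)%nat -> h k <= e2 z k (S n)).
  { intros k Hk. unfold h. rewrite (proj2 (Nat.leb_le k J)) by auto.
    destruct (max_upto_attained J (g k)) as [i [Hi ->]]. specialize (A1 i k Hi Hk). unfold g. lra. }
  assert (h_le_e2_far : h (S J) <= e2 z (S J) (S n)).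
  { unfold h. rewrite (proj2 (Nat.leb_nle (S J) J)) by lia.
    destruct (max_upto_attained J (fun i => - d1 z i n)) as [i [Hi ->]]. specialize (A3 i Hi). lra. }
  assert (e1_ge_h : forall j, (j <= J)%nat -> - h j <= e1 z j n).
  { intros j Hj. unfold h. rewrite (proj2 (Nat.leb_le j J)) by auto.
    pose proof (max_upto_ge J (g j) j Hj). unfold g in *. replace (x j - x j) with 0 in * by ring. lra. }
  assert (Hgamma : forall j, (1 <= j <= J)%nat -> 0 <= gamma J x h j).
  { apply gamma_nonneg_of_support; auto. intros j Hj.
    destruct (max_upto_attained J (g j)) as [i [Hi Ei]]. exists (- d1 z i n). split.
    - intros k Hk. unfold h. rewrite !(proj2 (Nat.leb_le _ J)) by auto. rewrite Ei.
      pose proof (max_upto_ge J (g k) i Hi). unfold g in *. lra.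
    - unfold h. rewrite (proj2 (Nat.leb_nle (S J) J)) by lia.
      apply (max_upto_ge J (fun i => - d1 z i n) i Hi). }
  pose proof (phat_increment_nonneg h n Hn Hgamma) as Hincr.
  rewrite <- sumR_add. rewrite sumR_last in Hincr |- * by lia.
  rewrite !phat_last in *.
  assert (sumR 0 J (fun j => h j * (phat J s0 x c j (S n) - phat J s0 x c j n))
          <= sumR 0 J (fun j => e1 z j n * phat J s0 x c j n + e2 z j (S n) * phat J s0 x c j (S n))).
  { apply sumR_le. intros j Hj. pose proof (phat_pos j n ltac:(lia) ltac:(lia)).
    pose proof (phat_pos j (S n) ltac:(lia) ltac:(lia)).
    pose proof (h_le_e2 j ltac:(lia)). pose proof (e1_ge_h j ltac:(lia)). nra. }
  pose proof (Hcal J n ltac:(lia) ltac:(lia)). pose proof (phat_pos (S J) n ltac:(lia) ltac:(lia)).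
  rewrite phat_last in *.
  assert (0 <= (e2 z (S J) (S n) - h (S J)) * (c J (S n) - c J n)) by (apply Rmult_le_pos; lra).
  assert (0 <= (e1 z (S J) n + e2 z (S J) (S n)) * c J n) by (apply Rmult_le_pos; lra).
  nra.
Qed.

Lemma lp_objective_nonneg z : lp_feasible N J t x a l z -> 0 <= lp_objective N J s0 x c z.
Proof.
  pose proof market as (HN & _).
  intros Hf. pose proof Hf as (Hbd & Hvpos & _). unfold lp_objective.
  rewrite (sumR_ext 1 N _ (fun n => sumR 0 (S J) (fun j => e1 z j n * phat J s0 x c j n)
                                    + sumR 0 (S J) (fun j => e2 z j n * phat J s0 x c j n)))
    by (intros; rewrite <- sumR_add; apply sumR_ext; intros; ring).
  assert (Hlast : sumR 1 N (fun n => sumR 0 (S J) (fun j => e1 z j n * phat J s0 x c j n))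
                  = sumR 1 (N - 1) (fun n => sumR 0 (S J) (fun j => e1 z j n * phat J s0 x c j n))).
  { replace N with (S (N - 1)) at 1 by lia. rewrite sumR_last by lia. replace (S (N - 1)) with N by lia.
    rewrite (sumR_eq0 0 (S J)); [ring|]. intros i Hi. rewrite (proj1 (Hbd i ltac:(lia))). ring. }
  assert (Hfirst : sumR 1 N (fun n => sumR 0 (S J) (fun j => e2 z j n * phat J s0 x c j n))
    = sumR 1 (N - 1) (fun n => sumR 0 (S J) (fun j => e2 z j (S n) * phat J s0 x c j (S n)))).
  { rewrite sumR_first by lia. replace N with (S (N - 1)) at 1 by lia. rewrite sumR_shift.
    rewrite (sumR_eq0 0 (S J)); [ring|]. intros i Hi. rewrite (proj2 (Hbd i ltac:(lia))). ring. }
  rewrite sumR_add, Hlast, Hfirst, <- sumR_add.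
  assert (0 <= sumR 1 (N - 1) (fun n => sumR 0 (S J) (fun j => e1 z j n * phat J s0 x c j n)
                                        + sumR 0 (S J) (fun j => e2 z j (S n) * phat J s0 x c j (S n))))
    by (apply sumR_nonneg; intros; apply lp_period_nonneg; auto).
  assert (0 <= sumR 0 (S J) (fun j => v z j N * phat J s0 x c j N)).
  { apply sumR_nonneg. intros j Hj. apply Rmult_le_pos; [apply Hvpos; lia | left; apply phat_pos; lia]. }
  lra.
Qed.
End LowerBound.

(** * Fourier-Motzkin elimination *)

Lemma exists_between (Ls Us : list R) : (forall p q, In p Ls -> In q Us -> p <= q) ->
  exists y, (forall p, In p Ls -> p <= y) /\ (forall q, In q Us -> y <= q).
Proof.
  intros H. destruct Ls as [|p0 Ls].
  - exists (MinRlist Us). split; [intros _ []| apply MinRlist_P1].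
  - exists (MaxRlist (p0 :: Ls)). split; [apply MaxRlist_P1|].
    intros q Hq. apply H; auto. apply MaxRlist_P2. exists p0. now left.
Qed.

Lemma affine_nonneg_iff_ge b c y : 0 < c -> (0 <= b + c * y <-> - b / c <= y).
Proof.
  intros Hc. replace (b + c * y) with (c * (y - - b / c)) by (field; lra).
  split; intros H; nra.
Qed.

Lemma affine_nonneg_iff_le b c y : c < 0 -> (0 <= b + c * y <-> y <= b / - c).
Proof.
  intros Hc. replace (b + c * y) with (- c * (b / - c - y)) by (field; lra).
  split; intros H; nra.
Qed.

Definition affine (K : nat) (g : (nat -> R) -> R) : Prop :=
  exists (coefs : nat -> R) (b : R), forall w, g w = b + sum_lt K (fun i => coefs i * w i).

Definition unit_vec (i : nat) : nat -> R := fun k => if Nat.eqb k i then 1 else 0.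
Definition zero_vec : nat -> R := fun _ => 0.
Definition coef (g : (nat -> R) -> R) (i : nat) : R := g (unit_vec i) - g zero_vec.
Definition set_coord (w : nat -> R) (K : nat) (y : R) : nat -> R :=
  fun i => if Nat.eqb i K then y else w i.

Lemma sum_lt_unit_vec K coefs i :
  sum_lt K (fun k => coefs k * unit_vec i k) = if Nat.ltb i K then coefs i else 0.
Proof.
  induction K as [|K IH]; simpl; [destruct i; reflexivity|]. rewrite IH. unfold unit_vec.
  destruct (Nat.eqb K i) eqn:E.
  - apply Nat.eqb_eq in E. subst.
    rewrite (proj2 (Nat.ltb_ge i i)), (proj2 (Nat.ltb_lt i (S i))) by lia. ring.
  - apply Nat.eqb_neq in E. destruct (Nat.ltb i K) eqn:E2.
    + rewrite (proj2 (Nat.ltb_lt i (S K))) by (apply Nat.ltb_lt in E2; lia). ring.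
    + rewrite (proj2 (Nat.ltb_ge i (S K))) by (apply Nat.ltb_ge in E2; lia). ring.
Qed.

Lemma affine_repr K g : affine K g -> forall w, g w = g zero_vec + sum_lt K (fun i => coef g i * w i).
Proof.
  intros [coefs [b Hg]] w.
  assert (H0 : g zero_vec = b).
  { rewrite Hg, (sum_lt_eq0 K) by (intros; unfold zero_vec; ring). ring. }
  rewrite H0, Hg. f_equal. apply sum_lt_ext. intros i Hi. unfold coef.
  rewrite H0, Hg, sum_lt_unit_vec, (proj2 (Nat.ltb_lt i K)) by auto. ring.
Qed.

Lemma affine_local K g w w' : affine K g -> (forall i, (i < K)%nat -> w i = w' i) -> g w = g w'.
Proof.
  intros [coefs [b Hg]] Hw. rewrite !Hg. f_equal. apply sum_lt_ext. intros i Hi. rewrite Hw; auto.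
Qed.

Lemma affine_set_coord K g w y : affine (S K) g -> g (set_coord w K y) = g (set_coord w K 0) + coef g K * y.
Proof.
  intros Hg. rewrite (affine_repr (S K) g Hg (set_coord w K y)), (affine_repr (S K) g Hg (set_coord w K 0)).
  cbn [sum_lt].
  unfold set_coord at 2 4. rewrite Nat.eqb_refl.
  rewrite (sum_lt_ext K (fun i => coef g i * set_coord w K y i) (fun i => coef g i * set_coord w K 0 i)).
  - ring.
  - intros i Hi. unfold set_coord. rewrite (proj2 (Nat.eqb_neq i K)) by lia. reflexivity.
Qed.

Lemma affine_coord K p : (p < K)%nat -> affine K (fun w => w p).
Proof.
  intros Hp. exists (unit_vec p), 0. intros w.
  rewrite (sum_lt_ext K _ (fun i => w i * unit_vec p i)) by (intros; ring).
  rewrite sum_lt_unit_vec, (proj2 (Nat.ltb_lt p K)) by auto. ring.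
Qed.

Lemma affine_const K b : affine K (fun _ => b).
Proof.
  exists (fun _ => 0), b. intros w.
  rewrite (sum_lt_eq0 K (fun i => 0 * w i)) by (intros; ring). ring.
Qed.

Lemma affine_lincomb K r1 r2 g1 g2 : affine K g1 -> affine K g2 ->
  affine K (fun w => r1 * g1 w + r2 * g2 w).
Proof.
  intros [a1 [b1 H1]] [a2 [b2 H2]]. exists (fun i => r1 * a1 i + r2 * a2 i), (r1 * b1 + r2 * b2).
  intros w. rewrite H1, H2.
  rewrite (sum_lt_ext K (fun i => (r1 * a1 i + r2 * a2 i) * w i)
            (fun i => r1 * (a1 i * w i) + r2 * (a2 i * w i))) by (intros; ring).
  rewrite sum_lt_add, !sum_lt_scal. ring.
Qed.

Lemma affine_ext K g1 g2 : (forall w, g1 w = g2 w) -> affine K g1 -> affine K g2.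
Proof. intros E [coefs [b H]]. exists coefs, b. intros w. rewrite <- E. apply H. Qed.

Lemma affine_add K g1 g2 : affine K g1 -> affine K g2 -> affine K (fun w => g1 w + g2 w).
Proof.
  intros H1 H2. apply (affine_ext K (fun w => 1 * g1 w + 1 * g2 w)); [intros; ring|].
  now apply affine_lincomb.
Qed.

Lemma affine_sub K g1 g2 : affine K g1 -> affine K g2 -> affine K (fun w => g1 w - g2 w).
Proof.
  intros H1 H2. apply (affine_ext K (fun w => 1 * g1 w + (-1) * g2 w)); [intros; ring|].
  now apply affine_lincomb.
Qed.

Lemma affine_opp K g : affine K g -> affine K (fun w => - g w).
Proof.
  intros H. apply (affine_ext K (fun w => 0 * g w + (-1) * g w)); [intros; ring|].
  now apply affine_lincomb.
Qed.

Lemma affine_scal K r g : affine K g -> affine K (fun w => r * g w).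
Proof.
  intros H. apply (affine_ext K (fun w => r * g w + 0 * g w)); [intros; ring|]. now apply affine_lincomb.
Qed.

Lemma affine_scal_r K r g : affine K g -> affine K (fun w => g w * r).
Proof. intros H. apply (affine_ext K (fun w => r * g w)); [intros; ring|]. now apply affine_scal. Qed.

Lemma affine_sum_lt K k (G : nat -> (nat -> R) -> R) : (forall i, (i < k)%nat -> affine K (G i)) ->
  affine K (fun w => sum_lt k (fun i => G i w)).
Proof.
  induction k as [|k IH]; intros HG; simpl; [apply affine_const|].
  apply affine_add; [apply IH; intros; apply HG|apply HG]; lia.
Qed.

Lemma affine_sumR K m n (G : nat -> (nat -> R) -> R) : (forall i, (m <= i <= n)%nat -> affine K (G i)) ->
  affine K (fun w => sumR m n (fun i => G i w)).
Proof. intros HG. apply (affine_sum_lt K _ (fun i => G (m + i)%nat)). intros. apply HG. lia. Qed.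

Section Elimination.
Variable K : nat.

Definition coef_zero (g : (nat -> R) -> R) : bool := if Req_EM_T (coef g K) 0 then true else false.
Definition coef_pos (g : (nat -> R) -> R) : bool := if Rlt_dec 0 (coef g K) then true else false.
Definition coef_neg (g : (nat -> R) -> R) : bool := if Rlt_dec (coef g K) 0 then true else false.

Definition cancel_coord (P Q : (nat -> R) -> R) : (nat -> R) -> R :=
  fun w => (- coef Q K) * P w + coef P K * Q w.

Definition eliminate (cs : list ((nat -> R) -> R)) : list ((nat -> R) -> R) :=
  filter coef_zero cs
  ++ flat_map (fun P => map (cancel_coord P) (filter coef_neg cs)) (filter coef_pos cs).

Lemma In_eliminate g cs : In g (eliminate cs) <->
  (In g cs /\ coef g K = 0) \/
  (exists P Q, In P cs /\ In Q cs /\ 0 < coef P K /\ coef Q K < 0 /\ g = cancel_coord P Q).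
Proof.
  unfold eliminate, coef_zero. rewrite in_app_iff, filter_In, in_flat_map. split.
  - intros [[Hg Hz]|[P [HP Hin]]].
    + left. destruct (Req_EM_T (coef g K) 0); [auto|discriminate].
    + apply in_map_iff in Hin. destruct Hin as [Q [<- HQ]].
      apply filter_In in HP, HQ. destruct HP as [HP HPs], HQ as [HQ HQs].
      unfold coef_pos, coef_neg in *.
      destruct (Rlt_dec 0 (coef P K)); [|discriminate]. destruct (Rlt_dec (coef Q K) 0); [|discriminate].
      right. exists P, Q. auto.
  - intros [[Hg Hz]|(P & Q & HP & HQ & HPp & HQn & ->)].
    + left. split; auto. destruct (Req_EM_T (coef g K) 0); [reflexivity|contradiction].
    + right. exists P. split.
      * apply filter_In. split; auto. unfold coef_pos. destruct (Rlt_dec 0 (coef P K)); [reflexivity|lra].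
      * apply in_map, filter_In. split; auto.
        unfold coef_neg. destruct (Rlt_dec (coef Q K) 0); [reflexivity|lra].
Qed.

Lemma affine_drop_coord g : affine (S K) g -> coef g K = 0 -> affine K g.
Proof.
  intros Hg Hc. exists (coef g), (g zero_vec). intros w.
  rewrite (affine_repr (S K) g Hg w). cbn [sum_lt]. rewrite Hc. ring.
Qed.

Lemma eliminate_affine cs : (forall g, In g cs -> affine (S K) g) ->
  forall g, In g (eliminate cs) -> affine K g.
Proof.
  intros Hcs g Hg. apply In_eliminate in Hg as [[Hg Hz]|(P & Q & HP & HQ & _ & _ & ->)].
  - apply affine_drop_coord; auto.
  - apply affine_drop_coord; [apply affine_lincomb; auto|]. unfold coef at 1, cancel_coord. unfold coef. ring.
Qed.

Section System.
Variable cs : list ((nat -> R) -> R).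
Hypothesis cs_affine : forall g, In g cs -> affine (S K) g.

Lemma eliminate_local g w y : In g (eliminate cs) -> g w = g (set_coord w K y).
Proof.
  intros Hg. apply (affine_local K); [apply (eliminate_affine cs cs_affine); auto|].
  intros i Hi. unfold set_coord. rewrite (proj2 (Nat.eqb_neq i K)) by lia. reflexivity.
Qed.

Lemma eliminate_sound w y : (forall g, In g cs -> 0 <= g (set_coord w K y)) ->
  forall g, In g (eliminate cs) -> 0 <= g w.
Proof.
  intros Hy g Hg. rewrite (eliminate_local g w y Hg).
  apply In_eliminate in Hg as [[Hg _]|(P & Q & HP & HQ & HPp & HQn & ->)]; auto.
  unfold cancel_coord. pose proof (Hy P HP). pose proof (Hy Q HQ).
  assert (0 <= - coef Q K * P (set_coord w K y)) by (apply Rmult_le_pos; lra).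
  assert (0 <= coef P K * Q (set_coord w K y)) by (apply Rmult_le_pos; lra). lra.
Qed.

(* Each constraint with [coef g K > 0] (resp. [< 0]) is a lower (resp. upper) bound on the coordinate
   [K]; the cancelled pairs say that every lower bound lies below every upper bound. *)
Lemma eliminate_complete w : (forall g, In g (eliminate cs) -> 0 <= g w) ->
  exists y, forall g, In g cs -> 0 <= g (set_coord w K y).
Proof.
  intros Hw. set (r (g : (nat -> R) -> R) := g (set_coord w K 0)).
  assert (Hr : forall g y, In g cs -> g (set_coord w K y) = r g + coef g K * y)
    by (intros; apply affine_set_coord; auto).
  set (lower (P : (nat -> R) -> R) := - r P / coef P K).
  set (upper (Q : (nat -> R) -> R) := r Q / - coef Q K).
  destruct (exists_between (map lower (filter coef_pos cs)) (map upper (filter coef_neg cs)))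
    as [y [Hlow Hup]].
  - intros p q Hp Hq. apply in_map_iff in Hp as [P [<- HP]]. apply in_map_iff in Hq as [Q [<- HQ]].
    apply filter_In in HP as [HP HPs]. apply filter_In in HQ as [HQ HQs]. unfold coef_pos, coef_neg in *.
    destruct (Rlt_dec 0 (coef P K)); [|discriminate]. destruct (Rlt_dec (coef Q K) 0); [|discriminate].
    assert (Hc : In (cancel_coord P Q) (eliminate cs)) by (apply In_eliminate; right; exists P, Q; auto).
    pose proof (Hw _ Hc) as H0. rewrite (eliminate_local _ w 0 Hc) in H0. unfold cancel_coord in H0.
    fold (r P) (r Q) in H0. unfold lower. apply affine_nonneg_iff_ge; auto.
    replace (r P + coef P K * upper Q) with ((- coef Q K * r P + coef P K * r Q) / - coef Q K)
      by (unfold upper; field; lra).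
    apply Rmult_le_pos; [lra | left; apply Rinv_0_lt_compat; lra].
  - exists y. intros g Hg. rewrite Hr by auto.
    destruct (Rtotal_order (coef g K) 0) as [Hneg|[Hz|Hpos]].
    + apply affine_nonneg_iff_le; auto. apply (Hup (upper g)), in_map, filter_In. split; auto.
      unfold coef_neg. destruct (Rlt_dec (coef g K) 0); auto.
    + rewrite Hz, Rmult_0_l, Rplus_0_r. unfold r. rewrite <- (eliminate_local g w 0).
      * apply Hw, In_eliminate. auto.
      * apply In_eliminate. auto.
    + apply affine_nonneg_iff_ge; auto. apply (Hlow (lower g)), in_map, filter_In. split; auto.
      unfold coef_pos. destruct (Rlt_dec 0 (coef g K)); auto.
Qed.
End System.
End Elimination.

Lemma set_coord_same w K : set_coord w K (w K) = w.
Proof.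
  apply functional_extensionality. intros i. unfold set_coord.
  destruct (Nat.eqb i K) eqn:E; [apply Nat.eqb_eq in E; now subst|reflexivity].
Qed.

Lemma set_coord_comm w i j yi yj : i <> j ->
  set_coord (set_coord w i yi) j yj = set_coord (set_coord w j yj) i yi.
Proof.
  intros Hij. apply functional_extensionality. intros k. unfold set_coord.
  destruct (Nat.eqb k j) eqn:Ej, (Nat.eqb k i) eqn:Ei; auto.
  apply Nat.eqb_eq in Ej, Ei. subst. contradiction.
Qed.

Lemma set_coord_eq w K y : set_coord w K y K = y.
Proof. unfold set_coord. now rewrite Nat.eqb_refl. Qed.

Theorem fourier_motzkin m cs : (forall g, In g cs -> affine (S m) g) ->
  exists cs1, (forall g, In g cs1 -> affine 1 g) /\
    forall y, (exists w, forall g, In g cs -> 0 <= g (set_coord w 0 y))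
              <-> (forall g, In g cs1 -> 0 <= g (fun _ => y)).
Proof.
  revert cs. induction m as [|m IH]; intros cs Hcs.
  - exists cs. split; auto. intros y.
    assert (Hloc : forall g w, In g cs -> g (set_coord w 0 y) = g (fun _ => y)).
    { intros g w Hg. apply (affine_local 1); auto. intros i Hi.
      replace i with 0%nat by lia. apply set_coord_eq. }
    split.
    + intros [w Hw] g Hg. rewrite <- (Hloc g w Hg). auto.
    + intros Hy. exists zero_vec. intros g Hg. rewrite Hloc; auto.
  - destruct (IH (eliminate (S m) cs) (eliminate_affine (S m) cs Hcs)) as [cs1 [Hcs1 Hproj]].
    exists cs1. split; auto. intros y. rewrite <- Hproj. split.
    + intros [w Hw]. exists w. apply (eliminate_sound (S m) cs Hcs _ (w (S m))).
      change (w (S m)) with (set_coord w 0 y (S m)). rewrite set_coord_same. exact Hw.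
    + intros [w Hw]. destruct (eliminate_complete (S m) cs Hcs _ Hw) as [z Hz].
      exists (set_coord w (S m) z). rewrite <- set_coord_comm by lia. exact Hz.
Qed.

Lemma affine1_min_attained cs y0 lb : (forall g, In g cs -> affine 1 g) ->
  (forall g, In g cs -> 0 <= g (fun _ => y0)) ->
  (forall y, (forall g, In g cs -> 0 <= g (fun _ => y)) -> lb <= y) ->
  exists ymin, (forall g, In g cs -> 0 <= g (fun _ => ymin)) /\
    forall y, (forall g, In g cs -> 0 <= g (fun _ => y)) -> ymin <= y.
Proof.
  intros Hcs Hy0 Hlb.
  assert (Hrep : forall g y, In g cs -> g (fun _ => y) = g zero_vec + coef g 0 * y)
    by (intros g y Hg; rewrite (affine_repr 1 g (Hcs g Hg)); simpl; ring).
  set (lower (g : (nat -> R) -> R) := - g zero_vec / coef g 0).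
  set (Ls := map lower (filter (coef_pos 0) cs)).
  assert (HLs : forall g, In g cs -> 0 < coef g 0 -> In (lower g) Ls).
  { intros g Hg Hc. apply in_map, filter_In. split; auto.
    unfold coef_pos. destruct (Rlt_dec 0 (coef g 0)); auto. }
  assert (HLs_inv : forall p, In p Ls -> exists g, In g cs /\ 0 < coef g 0 /\ p = lower g).
  { intros p Hp. apply in_map_iff in Hp as [g [<- Hg]]. apply filter_In in Hg as [Hg Hgs].
    unfold coef_pos in Hgs. destruct (Rlt_dec 0 (coef g 0)); [|discriminate]. eauto. }
  destruct Ls as [|p0 Ls'] eqn:ELs.
  - exfalso. assert (Hsat : forall g, In g cs -> 0 <= g (fun _ => Rmin y0 (lb - 1))).
    { intros g Hg. rewrite Hrep by auto. pose proof (Hy0 g Hg) as H0. rewrite Hrep in H0 by auto.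
      destruct (Rlt_dec 0 (coef g 0)) as [Hp|Hnp]; [destruct (HLs g Hg Hp)|].
      pose proof (Rmin_l y0 (lb - 1)). nra. }
    pose proof (Hlb _ Hsat). pose proof (Rmin_r y0 (lb - 1)). lra.
  - set (ymin := MaxRlist Ls).
    destruct (HLs_inv ymin) as [P (HP & HPpos & EP)].
    { unfold ymin. rewrite ELs. apply MaxRlist_P2. exists p0. now left. }
    assert (Hbelow : forall y, (forall g, In g cs -> 0 <= g (fun _ => y)) -> ymin <= y).
    { intros y Hy. rewrite EP. apply (affine_nonneg_iff_ge _ _ _ HPpos). rewrite <- Hrep; auto. }
    exists ymin. split; auto. intros g Hg. rewrite Hrep by auto.
    destruct (Rtotal_order (coef g 0) 0) as [Hneg|[Hz|Hpos]].
    + pose proof (Hbelow y0 Hy0). pose proof (Hy0 g Hg) as H0. rewrite Hrep in H0 by auto. nra.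
    + pose proof (Hy0 g Hg) as H0. rewrite Hrep in H0 by auto. rewrite Hz in *. lra.
    + apply affine_nonneg_iff_ge; auto. unfold ymin. rewrite <- ELs in *. apply MaxRlist_P1, (HLs g Hg Hpos).
Qed.

Theorem polyhedron_min_attained m cs : (forall g, In g cs -> affine (S m) g) ->
  (exists w, forall g, In g cs -> 0 <= g w) ->
  (exists lb, forall w, (forall g, In g cs -> 0 <= g w) -> lb <= w 0%nat) ->
  exists wmin, (forall g, In g cs -> 0 <= g wmin) /\
    forall w, (forall g, In g cs -> 0 <= g w) -> wmin 0%nat <= w 0%nat.
Proof.
  intros Hcs [w0 Hw0] [lb Hlb].
  destruct (fourier_motzkin m cs Hcs) as [cs1 [Hcs1 Hproj]].
  assert (Hfeas : forall w, (forall g, In g cs -> 0 <= g w) -> forall g, In g cs1 -> 0 <= g (fun _ => w 0%nat)).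
  { intros w Hw. apply Hproj. exists w. now rewrite set_coord_same. }
  destruct (affine1_min_attained cs1 (w0 0%nat) lb Hcs1 (Hfeas w0 Hw0)) as [ymin [Hymin Hmin]].
  { intros y Hy. apply Hproj in Hy as [w Hw]. rewrite <- (set_coord_eq w 0 y). auto. }
  apply Hproj in Hymin as [w Hw]. exists (set_coord w 0 ymin). split; [exact Hw|].
  intros w' Hw'. rewrite set_coord_eq. apply Hmin, Hfeas, Hw'.
Qed.

(** * The linear program as a polyhedron *)

Lemma to_nat_mono x y x' y' : (x <= x')%nat -> (y <= y')%nat ->
  (Cantor.to_nat (x, y) <= Cantor.to_nat (x', y'))%nat.
Proof.
  intros Hx Hy. pose proof (to_nat_spec x y). pose proof (to_nat_spec x' y').
  assert ((y + x) * S (y + x) <= (y' + x') * S (y' + x'))%nat by (apply Nat.mul_le_mono; lia). lia.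
Qed.

Lemma Forall_seq (P : nat -> Prop) s k : Forall P (seq s k) <-> (forall i, (s <= i < s + k)%nat -> P i).
Proof. rewrite Forall_forall. setoid_rewrite in_seq. reflexivity. Qed.

#[local] Instance Forall_iff_proper A : Proper (pointwise_relation A iff ==> eq ==> iff) (@Forall A).
Proof. intros P Q HPQ ? l ->. split; apply Forall_impl; firstorder. Qed.

Section Encoding.
Variables (N J : nat) (t : nat -> R) (s0 : R) (x : nat -> R) (c : nat -> nat -> R)
  (a : R -> R -> R) (l : nat -> R).

(* Coordinate [0] is kept free for the value of the objective. *)
Definition lp_coord (f j n : nat) : nat := S (Cantor.to_nat (f, Cantor.to_nat (j, n))).
Definition lp_dim : nat := S (S (Cantor.to_nat (4%nat, Cantor.to_nat (S J, N)))).

Lemma lp_coord_lt f j n : (f <= 4)%nat -> (j <= S J)%nat -> (n <= N)%nat -> (lp_coord f j n < lp_dim)%nat.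
Proof.
  intros. unfold lp_coord, lp_dim. apply -> Nat.succ_lt_mono.
  apply Nat.lt_succ_r, to_nat_mono, to_nat_mono; lia.
Qed.

Definition lp_decode (w : nat -> R) : lpvar :=
  LPvar (fun j n => w (lp_coord 0 j n)) (fun j n => w (lp_coord 1 j n)) (fun j n => w (lp_coord 2 j n))
        (fun j n => w (lp_coord 3 j n)) (fun j n => w (lp_coord 4 j n)).

Definition lp_encode (z : lpvar) (i : nat) : R :=
  let '(f, p) := Cantor.of_nat (Nat.pred i) in
  let '(j, n) := Cantor.of_nat p in
  match f with 0 => e1 z j n | 1 => e2 z j n | 2 => v z j n | 3 => d1 z j n | _ => d2 z j n end%nat.

Lemma lp_decode_encode z : lp_decode (lp_encode z) = z.
Proof.
  destruct z as [E1 E2 V D1 D2]. unfold lp_decode, lp_encode, lp_coord.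
  f_equal; apply functional_extensionality; intros j; apply functional_extensionality; intros n;
    cbn [Nat.pred]; rewrite !cancel_of_to; reflexivity.
Qed.

(* The ranges are written [J + 1] and [J + 2] rather than [S J] and [S (S J)] so that [seq] does not
   unfold during the rewriting in [lp_system_spec]. *)
Definition lp_system : list ((nat -> R) -> R) :=
  [fun w => w 0%nat - lp_objective N J s0 x c (lp_decode w)]
  ++ flat_map (fun j => [fun w => e1 (lp_decode w) j N; fun w => - e1 (lp_decode w) j N;
                         fun w => e2 (lp_decode w) j 1%nat; fun w => - e2 (lp_decode w) j 1%nat])
       (seq 0 (J + 2))
  ++ flat_map (fun n => map (fun j w => v (lp_decode w) j n) (seq 0 (J + 2))) (seq 1 N)
  ++ flat_map (fun n => map (fun j w => v (lp_decode w) j n - a (x j) (t n)) (seq 0 (J + 1))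
                        ++ [fun w => v (lp_decode w) (S J) n - l n]) (seq 1 N)
  ++ flat_map (fun n =>
       flat_map (fun j => map (fun k w => e1 (lp_decode w) j n + e2 (lp_decode w) k (S n)
                                          + (x k - x j) * d1 (lp_decode w) j n) (seq 0 (J + 1))) (seq 0 (J + 1))
       ++ [fun w => e1 (lp_decode w) (S J) n - d1 (lp_decode w) (S J) n]
       ++ map (fun j w => e2 (lp_decode w) (S J) (S n) + d1 (lp_decode w) j n) (seq 0 (J + 1))
       ++ [fun w => e1 (lp_decode w) (S J) n + e2 (lp_decode w) (S J) (S n)]) (seq 1 (N - 1))
  ++ flat_map (fun n =>
       flat_map (fun j => map (fun k w => e1 (lp_decode w) j n + e2 (lp_decode w) k (S n)
                                          + (x k - x j) * d2 (lp_decode w) j n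
                                          - v (lp_decode w) j n + v (lp_decode w) k (S n)) (seq 0 (J + 1)))
         (seq 0 (J + 1))
       ++ [fun w => e1 (lp_decode w) (S J) n - d2 (lp_decode w) (S J) n - v (lp_decode w) (S J) n]
       ++ map (fun j w => e2 (lp_decode w) (S J) (S n) + d2 (lp_decode w) j n + v (lp_decode w) (S J) (S n))
            (seq 0 (J + 1))
       ++ [fun w => e1 (lp_decode w) (S J) n + e2 (lp_decode w) (S J) (S n)
                    - v (lp_decode w) (S J) n + v (lp_decode w) (S J) (S n)]) (seq 1 (N - 1)).

Lemma lp_system_spec w : Forall (fun g => 0 <= g w) lp_system <->
  lp_feasible N J t x a l (lp_decode w) /\ lp_objective N J s0 x c (lp_decode w) <= w 0%nat.
Proof.
  unfold lp_system, lp_feasible.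
  repeat (setoid_rewrite Forall_app || setoid_rewrite Forall_flat_map || setoid_rewrite Forall_map; cbv beta).
  repeat setoid_rewrite Forall_seq. repeat setoid_rewrite Forall_cons_iff. setoid_rewrite Forall_nil_iff.
  split.
  - intros ((Hobj & _) & Hbd & Hv & Hi & Hii & Hiii). split; [|lra]. split; [|split; [|split; [|split]]].
    + intros j Hj. destruct (Hbd j ltac:(lia)) as (? & ? & ? & ? & _). split; lra.
    + intros j n Hj Hn. apply Hv; lia.
    + intros n Hn. destruct (Hi n ltac:(lia)) as (A & B & _).
      split; [intros j Hj; specialize (A j ltac:(lia)) | ]; lra.
    + intros n Hn. destruct (Hii n ltac:(lia)) as (A & (B & _) & C & D & _).
      split; [|split; [|split]]; auto; intros; [apply A | apply C]; lia.
    + intros n Hn. destruct (Hiii n ltac:(lia)) as (A & (B & _) & C & D & _).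
      split; [|split; [|split]]; auto; intros; [apply A | apply C]; lia.
  - intros ((Hbd & Hv & Hi & Hii & Hiii) & Hobj). split; [split; [lra|exact I]|].
    split; [|split; [|split; [|split]]].
    + intros j Hj. destruct (Hbd j ltac:(lia)) as [A B]. rewrite A, B. repeat split; lra.
    + intros n Hn j Hj. apply Hv; lia.
    + intros n Hn. destruct (Hi n ltac:(lia)) as [A B].
      repeat split; [intros j Hj; specialize (A j ltac:(lia)) | ]; lra.
    + intros n Hn. destruct (Hii n ltac:(lia)) as (A & B & C & D).
      repeat split; auto; intros; [apply A | apply C]; lia.
    + intros n Hn. destruct (Hiii n ltac:(lia)) as (A & B & C & D).
      repeat split; auto; intros; [apply A | apply C]; lia.
Qed.

Lemma lp_system_affine : (1 <= N)%nat -> Forall (affine lp_dim) lp_system.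
Proof.
  intros HN.
  assert (Hcoord : forall f j n, (f <= 4)%nat -> (j <= S J)%nat -> (n <= N)%nat ->
            affine lp_dim (fun w => w (lp_coord f j n)))
    by (intros; apply affine_coord, lp_coord_lt; auto).
  unfold lp_system, lp_objective, lp_decode. cbn [e1 e2 v d1 d2].
  repeat (setoid_rewrite Forall_app || setoid_rewrite Forall_flat_map || setoid_rewrite Forall_map; cbv beta).
  repeat setoid_rewrite Forall_seq. repeat setoid_rewrite Forall_cons_iff. setoid_rewrite Forall_nil_iff.
  repeat split; intros;
    repeat first [ apply affine_sumR; intros | apply Hcoord; lia | apply affine_coord; unfold lp_dim; lia
                 | apply affine_add | apply affine_sub | apply affine_opp | apply affine_scal
                 | apply affine_scal_r | apply affine_const ].
Qed.
End Encoding.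

Lemma lp_feasible_exists N J t x a l : (1 <= N)%nat -> exists z, lp_feasible N J t x a l z.
Proof.
  intros HN.
  set (M := sumR 1 N (fun n => sumR 0 J (fun j => Rabs (a (x j) (t n))) + Rabs (l n))).
  assert (Hterm : forall n, (1 <= n <= N)%nat ->
            sumR 0 J (fun j => Rabs (a (x j) (t n))) + Rabs (l n) <= M).
  { intros n Hn. apply (sumR_term_le 1 N (fun k => sumR 0 J (fun j => Rabs (a (x j) (t k))) + Rabs (l k))); auto.
    intros k _.
    pose proof (Rabs_pos (l k)). pose proof (sumR_nonneg 0 J (fun j => Rabs (a (x j) (t k)))
      ltac:(intros; apply Rabs_pos)). lra. }
  assert (HM : forall n, (1 <= n <= N)%nat ->
            (forall j, (j <= J)%nat -> a (x j) (t n) <= M) /\ l n <= M /\ 0 <= M).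
  { intros n Hn. pose proof (Hterm n Hn). pose proof (Rle_abs (l n)). pose proof (Rabs_pos (l n)).
    pose proof (sumR_nonneg 0 J (fun j => Rabs (a (x j) (t n))) ltac:(intros; apply Rabs_pos)).
    repeat split; try lra. intros j Hj. pose proof (Rle_abs (a (x j) (t n))).
    pose proof (sumR_term_le 0 J (fun j => Rabs (a (x j) (t n))) j ltac:(intros; apply Rabs_pos) ltac:(lia)).
    lra. }
  exists (LPvar (fun _ _ => 0) (fun _ _ => 0) (fun _ _ => M) (fun _ _ => 0)
                (fun j _ => if Nat.leb j J then 0 else - M)).
  assert (HSJ : Nat.leb (S J) J = false) by (apply Nat.leb_gt; lia).
  unfold lp_feasible. cbn [e1 e2 v d1 d2]. split; [|split; [|split; [|split]]].
  - auto.
  - intros j n _ Hn. apply (HM n Hn).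
  - intros n Hn. destruct (HM n Hn) as (? & ? & _). auto.
  - intros n Hn. repeat split; intros; lra.
  - intros n Hn. destruct (HM n ltac:(lia)) as (_ & _ & HM0). rewrite HSJ.
    repeat split; intros;
      repeat match goal with H : (?j <= J)%nat |- context [Nat.leb ?j J] =>
               rewrite (proj2 (Nat.leb_le j J) H) end; lra.
Qed.

Lemma lp_min_attained N J t s0 x c a l : market_assumptions N J t s0 x c ->
  exists zopt, lp_feasible N J t x a l zopt /\
    forall z, lp_feasible N J t x a l z -> lp_objective N J s0 x c zopt <= lp_objective N J s0 x c z.
Proof.
  intros market. pose proof market as (HN & _).
  set (feasible w := forall g, In g (lp_system N J t s0 x c a l) -> 0 <= g w).
  assert (Hspec : forall w, feasible w <->
            lp_feasible N J t x a l (lp_decode w) /\ lp_objective N J s0 x c (lp_decode w) <= w 0%nat)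
    by (intros w; unfold feasible; rewrite <- Forall_forall; apply lp_system_spec).
  assert (Hembed : forall z, lp_feasible N J t x a l z ->
            feasible (set_coord (lp_encode z) 0 (lp_objective N J s0 x c z))).
  { intros z Hz. apply Hspec.
    change (lp_decode (set_coord (lp_encode z) 0 ?y)) with (lp_decode (lp_encode z)).
    rewrite lp_decode_encode, set_coord_eq. split; [auto | lra]. }
  destruct (polyhedron_min_attained (pred (lp_dim N J)) (lp_system N J t s0 x c a l))
    as [wmin [Hwmin Hmin]].
  - apply Forall_forall. exact (lp_system_affine N J t s0 x c a l HN).
  - destruct (lp_feasible_exists N J t x a l HN) as [z0 Hz0]. eexists. apply (Hembed z0 Hz0).
  - exists 0. intros w Hw. apply Hspec in Hw as [Hf Ho].
    pose proof (lp_objective_nonneg N J t s0 x c a l market _ Hf). lra.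
  - apply Hspec in Hwmin as [Hf Ho]. exists (lp_decode wmin). split; [exact Hf|].
    intros z Hz. pose proof (Hmin _ (Hembed z Hz)) as Hle. rewrite set_coord_eq in Hle. lra.
Qed.

Theorem mainTheorem12 (N J : nat) (t : nat -> R) (s0 : R) (x : nat -> R)
    (c : nat -> nat -> R) (a : R -> R -> R) (l : nat -> R) :
  market_assumptions N J t s0 x c ->
  payoff_assumptions N t a l ->
  (exists zopt : lpvar,
     lp_feasible N J t x a l zopt /\
     (forall z, lp_feasible N J t x a l z ->
        lp_objective N J s0 x c zopt <= lp_objective N J s0 x c z) /\
     (* inf_{S^{R+,T}(a)} H <= Psi := lp_objective zopt *)
     (forall eps, 0 < eps -> exists St : strategy,
        in_SSS N J t x a St /\ cost N J c St < lp_objective N J s0 x c zopt + eps)) /\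
  (forall z, lp_feasible N J t x a l z ->
     in_SSS N J t x a (lp_strategy N J x z) /\
     cost N J c (lp_strategy N J x z) = lp_objective N J s0 x c z).
Proof.
  intros market payoff.
  assert (Hstrategy : forall z, lp_feasible N J t x a l z ->
    in_SSS N J t x a (lp_strategy N J x z) /\ cost N J c (lp_strategy N J x z) = lp_objective N J s0 x c z).
  { intros z Hz. split.
    - exact (lp_strategy_in_SSS N J t s0 x c a l market z Hz payoff).
    - exact (lp_strategy_cost N J t s0 x c market z). }
  split; [|exact Hstrategy].
  destruct (lp_min_attained N J t s0 x c a l market) as [zopt [Hfeas Hopt]].
  exists zopt. split; [exact Hfeas | split; [exact Hopt |]].
  intros eps Heps. exists (lp_strategy N J x zopt). destruct (Hstrategy zopt Hfeas) as [HS Hcost].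
  split; [exact HS | lra].
Qed.
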